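(* There are two positive $C^\infty$ functions $\psi_1,\psi_2$ on $\mathbb{R}$, solutions of $L_0(\psi)=0$, such that: (1) $\psi_1(-v)=\psi_2(v)>0$ for all $v\in\mathbb{R}$; (2) $\{\psi_1,\psi_2\}$ is a basis of solutions of $L_0(\psi)=0$, and the Wronskian satisfies $\psi_1\psi_2'-\psi_1'\psi_2=1$ on $\mathbb{R}$; (3) for some $v_0>0$ large enough and positive constants $c_1,c_2$, $$\psi_1(v)\lesssim |v|^{-\gamma}\ (v\geqslant v_0),\qquad \psi_1(v)\lesssim|v|^{1+\gamma}\ (v\leqslant -v_0),$$ $$\psi_1(v)\sim c_1|v|^{-\gamma}\text{ at }+\infty,\qquad \psi_1(v)\sim c_2|v|^{1+\gamma}\text{ at }-\infty,$$ and correspondingly $$\psi_2(v)\lesssim |v|^{\gamma+1}\ (v\geqslant v_0),\qquad \psi_2(v)\lesssim|v|^{-\gamma}\ (v\leqslant -v_0),$$ $$\psi_2(v)\sim c_2|v|^{1+\gamma}\text{ at }+\infty,\qquad \psi_2(v)\sim c_1|v|^{-\gamma}\text{ at }-\infty.$$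
   Context: Fix $\gamma>1/2$. Let $\tilde W(v)=\frac{\gamma(\gamma+1)}{1+v^2}$ and $L_0(\psi)=-\psi''+\tilde W\psi$ on $\mathbb{R}$. The symbol $A\lesssim B$ means $A\leqslant CB$ for a constant $C>0$ independent of $v$. *)

From Stdlib Require Import Reals.
From Coquelicot Require Import Coquelicot.
Open Scope R_scope.

Definition Wt (gamma v : R) : R := gamma * (gamma + 1) / (1 + v ^ 2).

Definition L0 (gamma : R) (psi : R -> R) (v : R) : R :=
  - Derive_n psi 2 v + Wt gamma v * psi v.

Definition smooth (f : R -> R) : Prop := forall (n : nat) (x : R), ex_derive_n f n x.

Definition is_solution (gamma : R) (phi : R -> R) : Prop :=
  (forall x, ex_derive phi x) /\ (forall x, ex_derive_n phi 2 x) /\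
  (forall x, L0 gamma phi x = 0).

Definition wronskian (f g : R -> R) (v : R) : R :=
  f v * Derive g v - Derive f v * g v.

Definition asymp_equiv (f g : R -> R) (l : Rbar) : Prop :=
  is_lim (fun v => f v / g v) l 1.

(* With m = gamma + 1 the equation L_0 psi = 0 reads (1 + v^2) psi'' = m (m - 1) psi, and it is
   solved by phi(v) = int_0^oo r^m (1 + (v + r)^2)^(-m) dr: after differentiating twice under the
   integral, (1 + v^2) phi'' - m (m - 1) phi is the integral in r of an exact derivative whose
   boundary terms vanish.  phi is positive with phi'(0) < 0, so phi and phi(-.) have a constant
   positive Wronskian W, and psi1 = phi / sqrt W, psi2 = psi1(-.) is a normalized basis; it is
   smooth because the potential is.  The substitution r = v y gives
   v^(m-1) phi(v) -> int_0^oo y^m (1 + y)^(-2m) dy, and l'Hopital's rule applied to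
   (phi(-.)/phi)' = W / phi^2 then gives phi(-v) ~ c v^m. *)

From Stdlib Require Import Reals Lra Lia Psatz.
From Coquelicot Require Import Coquelicot.
Open Scope R_scope.

Lemma is_derive_eq (f : R -> R) (x l l' : R) : is_derive f x l -> l = l' -> is_derive f x l'.
Proof. intros H <-; exact H. Qed.

(** Coquelicot's generic rules, restated at [R] so that [apply] unifies them with real terms. *)
Lemma is_derive_Rplus (f g : R -> R) (x df dg : R) : is_derive f x df -> is_derive g x dg ->
  is_derive (fun y => f y + g y) x (df + dg).
Proof. intros Hf Hg. apply (is_derive_plus f g x df dg Hf Hg). Qed.

Lemma is_derive_Rmult (f g : R -> R) (x df dg : R) : is_derive f x df -> is_derive g x dg ->
  is_derive (fun y => f y * g y) x (df * g x + f x * dg).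
Proof. intros Hf Hg. apply (is_derive_mult f g x df dg Hf Hg). intros; apply Rmult_comm. Qed.

Lemma is_derive_Rcomp (f g : R -> R) (x df dg : R) : is_derive f (g x) df -> is_derive g x dg ->
  is_derive (fun y => f (g y)) x (dg * df).
Proof. intros Hf Hg. apply (is_derive_comp f g x df dg Hf Hg). Qed.

Lemma is_derive_Rid (x : R) : is_derive (fun y => y) x 1.
Proof. apply is_derive_Reals, derivable_pt_lim_id. Qed.

Lemma is_derive_shift (f df : R -> R) v r : (forall z, is_derive f z (df z)) ->
  is_derive (fun r => f (v + r)) r (df (v + r)).
Proof.
  intros Hf. eapply is_derive_eq.
  - apply (is_derive_Rcomp f (fun r => v + r) r (df (v + r)) 1); [apply Hf|auto_derive; trivial; ring].
  - ring.
Qed.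

Lemma is_derive_opp_arg (f df : R -> R) v : is_derive f (- v) (df (- v)) ->
  is_derive (fun v => f (- v)) v (- df (- v)).
Proof.
  intros Hf. eapply is_derive_eq.
  - apply (is_derive_Rcomp f Ropp v (df (- v)) (-1)); [exact Hf|auto_derive; trivial; ring].
  - ring.
Qed.

Lemma continuous_Rplus (f g : R -> R) x : continuous f x -> continuous g x ->
  continuous (fun y => f y + g y) x.
Proof. apply (continuous_plus (V:=R_NormedModule)). Qed.

Lemma continuous_Rmult (f g : R -> R) x : continuous f x -> continuous g x ->
  continuous (fun y => f y * g y) x.
Proof. apply (continuous_mult (K:=R_AbsRing)). Qed.

Lemma is_derive_continuous (f : R -> R) x l : is_derive f x l -> continuous f x.
Proof.
  intros H. apply (ex_derive_continuous (K:=R_AbsRing) (V:=R_NormedModule)). exists l; exact H.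
Qed.

Lemma Rpower_pos x a : 0 < Rpower x a.
Proof. apply exp_pos. Qed.

Lemma is_derive_Rpower x a : 0 < x -> is_derive (fun y => Rpower y a) x (a * Rpower x (a - 1)).
Proof. intros Hx. apply is_derive_Reals, derivable_pt_lim_power, Hx. Qed.

Lemma Rpower_sqr x a : 0 < x -> Rpower (x * x) a = Rpower x (2 * a).
Proof. intros Hx. rewrite <- Rpower_mult_distr, <- Rpower_plus by lra. f_equal; ring. Qed.

Lemma Rpower_Ropp_le_contravar k a c : 0 <= k -> 0 < a <= c -> Rpower c (- k) <= Rpower a (- k).
Proof.
  intros Hk Hac. rewrite !Rpower_Ropp. apply Rinv_le_contravar; [apply Rpower_pos|].
  apply Rle_Rpower_l; lra.
Qed.

Lemma Rpower_small_near_0 a eps : 0 < a -> 0 < eps ->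
  exists d, 0 < d /\ forall x, 0 < x < d -> Rpower x a < eps.
Proof.
  intros Ha He. exists (exp (ln eps / a)). split; [apply exp_pos|].
  intros x [Hx1 Hx2]. unfold Rpower. rewrite <- (exp_ln eps He). apply exp_increasing.
  assert (ln x < ln eps / a) by (rewrite <- (ln_exp (ln eps / a)); apply ln_increasing; auto).
  apply Rmult_lt_compat_l with (r := a) in H; [|exact Ha].
  replace (a * (ln eps / a)) with (ln eps) in H by (field; lra). lra.
Qed.

Lemma Rpower_small_near_p_infty b eps : b < 0 -> 0 < eps ->
  exists A, 0 < A /\ forall x, A <= x -> Rpower x b < eps.
Proof.
  intros Hb He. exists (exp (ln eps / b) + 1). split; [generalize (exp_pos (ln eps / b)); lra|].
  intros x Hx. assert (Hx0 : 0 < x) by (generalize (exp_pos (ln eps / b)); lra).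
  unfold Rpower. rewrite <- (exp_ln eps He). apply exp_increasing.
  assert (ln eps / b < ln x).
  { rewrite <- (ln_exp (ln eps / b)). apply ln_increasing; [apply exp_pos | lra]. }
  apply Rmult_lt_compat_r with (r := - b) in H; [|lra].
  replace (ln eps / b * - b) with (- ln eps) in H by (field; lra). lra.
Qed.

Definition pospow (a x : R) : R := if Rlt_dec 0 x then Rpower x a else 0.

Lemma pospow_pos a x : 0 < x -> pospow a x = Rpower x a.
Proof. intros H. unfold pospow. destruct (Rlt_dec 0 x); [reflexivity|lra]. Qed.

Lemma pospow_nonpos a x : x <= 0 -> pospow a x = 0.
Proof. intros H. unfold pospow. destruct (Rlt_dec 0 x); [lra|reflexivity]. Qed.

Lemma pospow_ge0 a x : 0 <= pospow a x.
Proof. unfold pospow. destruct (Rlt_dec 0 x); [left; apply Rpower_pos|lra]. Qed.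

Lemma pospow_gt0 a x : 0 < x -> 0 < pospow a x.
Proof. intros H. rewrite pospow_pos by exact H. apply Rpower_pos. Qed.

Lemma pospow_succ a x : pospow (a + 1) x = x * pospow a x.
Proof.
  destruct (Rlt_le_dec 0 x) as [H|H].
  - rewrite !pospow_pos, Rpower_plus, Rpower_1 by exact H. ring.
  - rewrite !pospow_nonpos by exact H. ring.
Qed.

Lemma pospow_le_Rpower a x : 1 <= a -> 0 <= x -> pospow a x <= Rpower (1 + x) a.
Proof.
  intros Ha Hx. destruct (Rlt_le_dec 0 x).
  - rewrite pospow_pos by lra. apply Rle_Rpower_l; lra.
  - rewrite pospow_nonpos by lra. left; apply Rpower_pos.
Qed.

Lemma locally_gt x c : c < x -> locally x (fun y => c < y).
Proof.
  intros Hx. assert (Hd : 0 < x - c) by lra. exists (mkposreal _ Hd). intros y Hy.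
  change (Rabs (y - x) < x - c) in Hy. apply Rabs_lt_between in Hy. lra.
Qed.

Lemma locally_lt x c : x < c -> locally x (fun y => y < c).
Proof.
  intros Hx. assert (Hd : 0 < c - x) by lra. exists (mkposreal _ Hd). intros y Hy.
  change (Rabs (y - x) < c - x) in Hy. apply Rabs_lt_between in Hy. lra.
Qed.

Lemma continuous_pospow a x : 0 < a -> continuous (pospow a) x.
Proof.
  intros Ha. destruct (Rlt_le_dec 0 x) as [Hx|Hx].
  - apply continuous_ext_loc with (fun y => Rpower y a).
    + apply (filter_imp (fun y => 0 < y)); [|exact (locally_gt x 0 Hx)].
      intros y Hy. symmetry. apply pospow_pos, Hy.
    + eapply is_derive_continuous, is_derive_Rpower, Hx.
  - apply continuity_pt_filterlim. intros eps Heps.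
    destruct (Rpower_small_near_0 a eps Ha Heps) as [d [Hd H]].
    exists d. split; [exact Hd|]. intros y [_ Hy]. unfold dist; simpl; unfold R_dist.
    rewrite (pospow_nonpos a x Hx), Rminus_0_r, Rabs_pos_eq by apply pospow_ge0.
    destruct (Rlt_le_dec 0 y) as [Hy0|Hy0].
    + rewrite pospow_pos by exact Hy0. apply H. unfold R_dist in Hy.
      apply Rabs_lt_between in Hy. lra.
    + rewrite pospow_nonpos by exact Hy0. lra.
Qed.

(** [x_+^a] is [C^1] for [a > 1]; at [0] the difference quotient is [h_+^(a-1)]. *)
Lemma is_derive_pospow a x : 1 < a -> is_derive (pospow a) x (a * pospow (a - 1) x).
Proof.
  intros Ha. destruct (Rtotal_order x 0) as [Hx|[Hx|Hx]].
  - rewrite pospow_nonpos, Rmult_0_r by lra.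
    apply is_derive_ext_loc with (fun _ => 0); [|auto_derive; reflexivity].
    apply (filter_imp (fun y => y < 0)); [|exact (locally_lt x 0 Hx)].
    intros y Hy. rewrite pospow_nonpos; lra.
  - subst x. rewrite pospow_nonpos, Rmult_0_r by lra.
    apply is_derive_Reals. intros eps Heps.
    destruct (Rpower_small_near_0 (a - 1) eps) as [d [Hd H]]; [lra|lra|].
    exists (mkposreal d Hd). intros h Hh0 Hh. simpl in Hh.
    rewrite Rplus_0_l, (pospow_nonpos a 0), !Rminus_0_r by lra.
    destruct (Rlt_le_dec 0 h) as [Hp|Hn].
    + rewrite pospow_pos by lra.
      replace (Rpower h a / h) with (Rpower h (a - 1)).
      * rewrite Rabs_pos_eq by (left; apply Rpower_pos). apply H.
        rewrite Rabs_pos_eq in Hh; lra.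
      * replace a with ((a - 1) + 1) at 2 by ring. rewrite Rpower_plus, Rpower_1 by lra.
        field. lra.
    + rewrite pospow_nonpos by lra. unfold Rdiv. rewrite Rmult_0_l, Rabs_R0. lra.
  - rewrite pospow_pos by lra.
    apply is_derive_ext_loc with (fun y => Rpower y a); [|apply is_derive_Rpower; lra].
    apply (filter_imp (fun y => 0 < y)); [|exact (locally_gt x 0 Hx)].
    intros y Hy. rewrite pospow_pos; lra.
Qed.

Lemma Cauchy_MVT (f g df dg : R -> R) a b : a < b ->
  (forall t, a <= t <= b -> is_derive f t (df t)) -> (forall t, a <= t <= b -> is_derive g t (dg t)) ->
  exists c, a <= c <= b /\ df c * (g b - g a) = dg c * (f b - f a).
Proof.
  intros Hab Hf Hg.
  set (H := fun t => f t * (g b - g a) - g t * (f b - f a)).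
  assert (HD : forall t, a <= t <= b ->
            is_derive H t (df t * (g b - g a) - dg t * (f b - f a))).
  { intros t Ht. unfold H, Rminus. eapply is_derive_eq.
    - apply is_derive_Rplus.
      + apply (is_derive_ext (fun t => (g b + - g a) * f t)); [intros; simpl; ring|].
        apply is_derive_scal, Hf, Ht.
      + apply (is_derive_ext (fun t => (- (f b + - f a)) * g t)); [intros; simpl; ring|].
        apply is_derive_scal, Hg, Ht.
    - ring. }
  destruct (MVT_gen H a b (fun t => df t * (g b - g a) - dg t * (f b - f a))) as [c [Hc E]].
  - intros t Ht. rewrite Rmin_left, Rmax_right in Ht by lra. apply HD. lra.
  - intros t Ht. rewrite Rmin_left, Rmax_right in Ht by lra. apply continuity_pt_filterlim.
    eapply is_derive_continuous, HD, Ht.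
  - rewrite Rmin_left, Rmax_right in Hc by lra. exists c. split; [exact Hc|].
    unfold H in E.
    assert (E2 : (df c * (g b - g a) - dg c * (f b - f a)) * (b - a) = 0) by lra.
    apply Rmult_integral in E2. destruct E2 as [E2|E2]; lra.
Qed.

Lemma lhopital_p_infty (f g df dg : R -> R) (A L : R) :
  (forall v, A < v -> is_derive f v (df v)) -> (forall v, A < v -> is_derive g v (dg v)) ->
  (forall v, A < v -> 0 < dg v) -> is_lim g p_infty p_infty ->
  is_lim (fun v => df v / dg v) p_infty L -> is_lim (fun v => f v / g v) p_infty L.
Proof.
  intros Hf Hg Hdg Hinf HT. apply is_lim_spec in Hinf, HT. apply is_lim_spec. intros eps.
  assert (He := cond_pos eps).
  destruct (HT (pos_div_2 eps)) as [A1 HA1]. simpl in HA1.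
  set (a := Rmax A1 A + 1).
  assert (Ha1 : A1 < a) by (unfold a; generalize (Rmax_l A1 A); lra).
  assert (HaA : A < a) by (unfold a; generalize (Rmax_r A1 A); lra).
  set (B := Rabs (f a) + (Rabs L + eps) * Rabs (g a)).
  assert (HB : 0 <= B) by (unfold B; generalize (Rabs_pos (f a)) (Rabs_pos L) (Rabs_pos (g a)); nra).
  destruct (Hinf (Rmax (g a) (2 * B / eps))) as [M HM].
  exists (Rmax M a). intros v Hv.
  assert (Hva : a < v) by (eapply Rle_lt_trans; [apply Rmax_r|exact Hv]).
  assert (HgM : Rmax (g a) (2 * B / eps) < g v) by (apply HM; eapply Rle_lt_trans; [apply Rmax_l|exact Hv]).
  assert (Hga : g a < g v) by (eapply Rle_lt_trans; [apply Rmax_l|exact HgM]).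
  assert (HgB : 2 * B / eps < g v) by (eapply Rle_lt_trans; [apply Rmax_r|exact HgM]).
  assert (Hgv : 0 < g v) by (eapply Rle_lt_trans; [|exact HgB]; apply Rdiv_le_0_compat; lra).
  destruct (Cauchy_MVT f g df dg a v Hva) as [c [Hc E]];
    [intros t Ht; apply Hf; lra|intros t Ht; apply Hg; lra|].
  assert (Hdc := Hdg c ltac:(lra)).
  set (th := (f v - f a) / (g v - g a)).
  assert (Hth : Rabs (th - L) < eps / 2).
  { replace th with (df c / dg c) by (unfold th; field_simplify_eq; lra). apply HA1. lra. }
  replace (f v / g v - L) with ((f a - th * g a) / g v + (th - L)) by (unfold th; field; lra).
  eapply Rle_lt_trans; [apply Rabs_triang|].
  enough (Rabs ((f a - th * g a) / g v) <= eps / 2) by lra.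
  assert (Hn : Rabs (f a - th * g a) <= B).
  { unfold B, Rminus. eapply Rle_trans; [apply Rabs_triang|]. rewrite Rabs_Ropp, Rabs_mult.
    apply Rplus_le_compat_l, Rmult_le_compat_r; [apply Rabs_pos|].
    replace th with ((th - L) + L) by ring. eapply Rle_trans; [apply Rabs_triang|lra]. }
  unfold Rdiv. rewrite Rabs_mult, Rabs_inv, (Rabs_pos_eq (g v)) by lra.
  apply Rmult_le_reg_r with (g v); [lra|]. rewrite Rmult_assoc, Rinv_l by lra.
  apply Rmult_lt_compat_l with (r := eps) in HgB; [|lra].
  replace (eps * (2 * B / eps)) with (2 * B) in HgB by (field; lra). lra.
Qed.

(** * Linear second-order equations *)

Lemma derive_zero_const (F dF : R -> R) : (forall v, is_derive F v (dF v)) -> (forall v, dF v = 0) ->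
  forall v, F v = F 0.
Proof.
  intros HD H0 v.
  destruct (MVT_gen F 0 v dF) as [c [_ E]].
  - intros; apply HD.
  - intros x _. apply continuity_pt_filterlim. eapply is_derive_continuous, HD.
  - rewrite H0 in E. lra.
Qed.

Section SecondOrderODE.
Variable p : R -> R.

Definition ode_solution (f df : R -> R) : Prop :=
  (forall v, is_derive f v (df v)) /\ (forall v, is_derive df v (p v * f v)).

Lemma ode_solution_scal k f df : ode_solution f df ->
  ode_solution (fun v => k * f v) (fun v => k * df v).
Proof.
  intros [Hf Hdf]. split; intros v; [apply is_derive_scal, Hf|].
  eapply is_derive_eq; [apply is_derive_scal, Hdf|ring].
Qed.

Lemma ode_solution_reflect f df : (forall v, p (- v) = p v) -> ode_solution f df ->
  ode_solution (fun v => f (- v)) (fun v => - df (- v)).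
Proof.
  intros Hp [Hf Hdf]. split; intros v.
  - apply is_derive_opp_arg, Hf.
  - apply (is_derive_ext (fun v => -1 * df (- v))); [intros; simpl; ring|].
    eapply is_derive_eq.
    + apply is_derive_scal, (is_derive_opp_arg df (fun v => p v * f v)), Hdf.
    + rewrite Hp. ring.
Qed.

Lemma wronskian_const f df g dg : ode_solution f df -> ode_solution g dg ->
  forall v, f v * dg v - df v * g v = f 0 * dg 0 - df 0 * g 0.
Proof.
  intros [Hf Hdf] [Hg Hdg].
  apply (derive_zero_const (fun v => f v * dg v - df v * g v)
           (fun v => f v * (p v * g v) - p v * f v * g v)).
  - intros v. unfold Rminus. eapply is_derive_eq.
    + apply is_derive_Rplus; [apply is_derive_Rmult; [apply Hf|apply Hdg]|].
      apply (is_derive_ext (fun v => -1 * (df v * g v))); [intros; simpl; ring|].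
      apply is_derive_scal, is_derive_Rmult; [apply Hdf|apply Hg].
    + ring.
  - intros v. ring.
Qed.

Section Basis.
Variables f df g dg : R -> R.
Hypotheses (Hf : ode_solution f df) (Hg : ode_solution g dg).
Hypothesis Hw : forall v, f v * dg v - df v * g v = 1.

Lemma ode_solution_independent a b : (forall v, a * f v + b * g v = 0) -> a = 0 /\ b = 0.
Proof.
  intros H.
  assert (H' : a * df 0 + b * dg 0 = 0).
  { assert (HD : is_derive (fun v => a * f v + b * g v) 0 (a * df 0 + b * dg 0)).
    { apply is_derive_Rplus; apply is_derive_scal; [apply (proj1 Hf)|apply (proj1 Hg)]. }
    apply is_derive_unique in HD. rewrite <- HD.
    rewrite (Derive_ext _ (fun _ => 0)) by apply H. apply Derive_const. }
  specialize (H 0). specialize (Hw 0). split.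
  - transitivity (a * (f 0 * dg 0 - df 0 * g 0)); [rewrite Hw; ring|].
    transitivity (dg 0 * (a * f 0 + b * g 0) - g 0 * (a * df 0 + b * dg 0)); [ring|].
    rewrite H, H'. ring.
  - transitivity (b * (f 0 * dg 0 - df 0 * g 0)); [rewrite Hw; ring|].
    transitivity (f 0 * (a * df 0 + b * dg 0) - df 0 * (a * f 0 + b * g 0)); [ring|].
    rewrite H, H'. ring.
Qed.

(** [h - b g] has zero Wronskian with [f] for the right [b], so [(h - b g) / f] is constant. *)
Lemma ode_solution_basis h dh : (forall v, 0 < f v) -> ode_solution h dh ->
  exists a b, forall v, h v = a * f v + b * g v.
Proof.
  intros Hpos Hh.
  set (b := f 0 * dh 0 - df 0 * h 0).
  assert (Wh : forall v, f v * dh v - df v * h v = b) by (intros v; apply (wronskian_const f df h dh Hf Hh)).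
  set (q := fun v => (h v - b * g v) / f v).
  assert (Hq : forall v, q v = q 0).
  { apply (derive_zero_const q (fun v => (f v * (dh v - b * dg v) - df v * (h v - b * g v)) / (f v * f v))).
    - intros v. assert (Hp := Hpos v). unfold q.
      apply (is_derive_ext (fun v => (h v - b * g v) * / f v)); [intros; reflexivity|].
      eapply is_derive_eq.
      + apply is_derive_Rmult; [|apply (is_derive_inv f); [apply (proj1 Hf)|lra]].
        apply (is_derive_ext (fun v => h v + (- b) * g v)); [intros; simpl; ring|].
        apply is_derive_Rplus; [apply (proj1 Hh)|apply is_derive_scal, (proj1 Hg)].
      + simpl. field. lra.
    - intros v. replace (f v * (dh v - b * dg v) - df v * (h v - b * g v))
        with ((f v * dh v - df v * h v) - b * (f v * dg v - df v * g v)) by ring.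
      rewrite Wh, Hw. unfold Rdiv. ring. }
  exists (q 0), b. intros v. specialize (Hq v). assert (Hp := Hpos v).
  rewrite <- Hq. unfold q. field. lra.
Qed.

End Basis.
End SecondOrderODE.

(** * Integrals over [[0, +oo)] *)

(** The integral over [[0, +oo)] as a limit along integer endpoints; junk unless that limit is finite. *)
Definition RInt_0_infty (f : R -> R) : R := real (Lim_seq (fun n => RInt f 0 (INR n))).

Lemma RInt_0_minus (f : R -> R) a b : 0 <= a <= b -> ex_RInt f 0 b ->
  RInt f 0 b - RInt f 0 a = RInt f a b.
Proof.
  intros Hab Hex. rewrite <- (RInt_Chasles f 0 a b).
  - change (plus (RInt f 0 a) (RInt f a b)) with (RInt f 0 a + RInt f a b). ring.
  - apply (ex_RInt_Chasles_1 f 0 a b); [lra|exact Hex].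
  - apply (ex_RInt_Chasles_2 f 0 a b); [lra|exact Hex].
Qed.

Lemma RInt_lincomb (f g : R -> R) a b A B : ex_RInt f a b -> ex_RInt g a b ->
  RInt (fun x => A * f x - B * g x) a b = A * RInt f a b - B * RInt g a b.
Proof.
  intros Hf Hg.
  rewrite (RInt_minus (V:=R_CompleteNormedModule) (fun x => A * f x) (fun x => B * g x)).
  - rewrite !(RInt_scal (V:=R_CompleteNormedModule)) by assumption. reflexivity.
  - apply (ex_RInt_scal (V:=R_CompleteNormedModule)), Hf.
  - apply (ex_RInt_scal (V:=R_CompleteNormedModule)), Hg.
Qed.

Lemma eventually_INR_ge (x : R) : eventually (fun n => x <= INR n).
Proof.
  destruct (INR_unbounded x) as [N HN]. exists N. intros n Hn.
  apply Rle_trans with (INR N); [lra|apply le_INR; exact Hn].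
Qed.

Lemma RInt_0_infty_tail (f T : R -> R) :
  (forall b, 0 <= b -> ex_RInt f 0 b) ->
  (forall a b, 0 <= a <= b -> Rabs (RInt f a b) <= T a) ->
  (forall eps, 0 < eps -> exists A, forall a, A <= a -> T a < eps) ->
  is_lim_seq (fun n => RInt f 0 (INR n)) (RInt_0_infty f) /\
  forall x, 0 <= x -> Rabs (RInt f 0 x - RInt_0_infty f) <= T x.
Proof.
  intros Hex Hb HT.
  set (u := fun n => RInt f 0 (INR n)).
  assert (Hu : forall x n, 0 <= x <= INR n -> Rabs (u n - RInt f 0 x) <= T x).
  { intros x n Hx. unfold u. rewrite RInt_0_minus by (try apply Hex; lra). apply Hb, Hx. }
  assert (Hc : ex_finite_lim_seq u).
  { apply ex_lim_seq_cauchy_corr. intros eps. destruct (HT eps (cond_pos eps)) as [A HA].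
    destruct (eventually_INR_ge (Rmax A 0)) as [N HN]. exists N. intros n k Hn Hk.
    generalize (HN n Hn) (HN k Hk) (Rmax_l A 0) (Rmax_r A 0). intros.
    destruct (Rle_dec (INR k) (INR n)).
    - apply Rle_lt_trans with (T (INR k)); [apply (Hu (INR k) n); lra | apply HA; lra].
    - rewrite Rabs_minus_sym.
      apply Rle_lt_trans with (T (INR n)); [apply (Hu (INR n) k); lra | apply HA; lra]. }
  assert (Hlim : is_lim_seq u (RInt_0_infty f)).
  { unfold RInt_0_infty. fold u.
    apply Lim_seq_correct', Hc. }
  split; [exact Hlim|]. intros x Hx.
  rewrite Rabs_minus_sym.
  apply (is_lim_seq_le_loc (fun n => Rabs (u n - RInt f 0 x)) (fun _ => T x)
           (Rabs (RInt_0_infty f - RInt f 0 x)) (T x)).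
  - destruct (eventually_INR_ge x) as [N HN]. exists N. intros n Hn. apply Hu. split; auto.
  - apply (is_lim_seq_abs _ (RInt_0_infty f - RInt f 0 x)).
    apply is_lim_seq_minus'; [exact Hlim|apply is_lim_seq_const].
  - apply is_lim_seq_const.
Qed.

Section Decay.
Variable m : R.
Hypothesis Hm : 1 < m.

Definition decay (r : R) := Rpower (1 + Rabs r) (- m).

Definition decay_tail (x : R) := Rpower (1 + x) (1 - m) / (m - 1).

Definition dominated (C : R) (f : R -> R) : Prop :=
  (forall x, continuous f x) /\ forall r, 0 <= r -> Rabs (f r) <= C * decay r.

Lemma decay_pos r : 0 < decay r.
Proof. apply Rpower_pos. Qed.

Lemma continuous_decay r : continuous decay r.
Proof.
  apply (continuous_comp (fun r => 1 + Rabs r) (fun u => Rpower u (- m))).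
  - apply continuous_Rplus; [apply continuous_const|apply continuous_Rabs].
  - eapply is_derive_continuous, is_derive_Rpower. generalize (Rabs_pos r); lra.
Qed.

Lemma RInt_decay a b : 0 <= a <= b -> RInt decay a b = decay_tail a - decay_tail b.
Proof.
  intros Hab. unfold decay_tail.
  rewrite (RInt_ext decay (fun r => Rpower (1 + r) (- m))).
  2:{ intros x Hx. rewrite Rmin_left, Rmax_right in Hx by lra.
      unfold decay. rewrite Rabs_pos_eq by lra. reflexivity. }
  apply is_RInt_unique.
  set (F := fun r => - Rpower (1 + r) (1 - m) / (m - 1)).
  replace (Rpower (1 + a) (1 - m) / (m - 1) - Rpower (1 + b) (1 - m) / (m - 1))
    with (minus (F b) (F a)) by (unfold F, minus, plus, opp; simpl; field; lra).
  apply (is_RInt_derive (V:=R_CompleteNormedModule)).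
  - intros x Hx. rewrite Rmin_left, Rmax_right in Hx by lra. unfold F.
    eapply is_derive_eq.
    + apply (is_derive_ext (fun r => (-1 / (m - 1)) * Rpower (1 + r) (1 - m)));
        [intros t; simpl; field; lra|].
      apply is_derive_scal.
      apply (is_derive_Rcomp (fun u => Rpower u (1 - m)) (fun r => 1 + r) x
         ((1 - m) * Rpower (1 + x) (1 - m - 1)) 1);
        [apply is_derive_Rpower; lra | auto_derive; trivial; ring].
    + replace (1 - m - 1) with (- m) by ring. field. lra.
  - intros x Hx. rewrite Rmin_left, Rmax_right in Hx by lra.
    apply (continuous_comp (fun r => 1 + r) (fun u => Rpower u (- m))).
    + apply continuous_Rplus; [apply continuous_const|apply continuous_id].
    + eapply is_derive_continuous, is_derive_Rpower. lra.
Qed.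

Lemma decay_tail_small C eps : 0 <= C -> 0 < eps ->
  exists A, forall a, A <= a -> C * decay_tail a < eps.
Proof.
  intros HC He. unfold decay_tail.
  destruct (Rpower_small_near_p_infty (1 - m) (eps * (m - 1) / (C + 1))) as [A [HA HA2]].
  - lra.
  - apply Rdiv_lt_0_compat; nra.
  - exists A. intros a Ha.
    assert (H1 : Rpower (1 + a) (1 - m) < eps * (m - 1) / (C + 1)) by (apply HA2; lra).
    assert (H2 := Rpower_pos (1 + a) (1 - m)).
    apply Rle_lt_trans with ((C + 1) * (Rpower (1 + a) (1 - m) / (m - 1))).
    + apply Rmult_le_compat_r; [apply Rdiv_le_0_compat; lra|lra].
    + apply Rmult_lt_compat_l with (r := C + 1) in H1; [|lra].
      replace ((C + 1) * (eps * (m - 1) / (C + 1))) with (eps * (m - 1)) in H1 by (field; lra).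
      apply Rmult_lt_reg_r with (m - 1); [lra|].
      replace ((C + 1) * (Rpower (1 + a) (1 - m) / (m - 1)) * (m - 1))
        with ((C + 1) * Rpower (1 + a) (1 - m)) by (field; lra). exact H1.
Qed.

Section Dominated.
Variables (C : R) (f : R -> R).
Hypothesis Hf : dominated C f.

Lemma dominated_const_nonneg : 0 <= C.
Proof.
  destruct Hf as [_ Hb]. specialize (Hb 0 (Rle_refl 0)).
  generalize (Rabs_pos (f 0)) (decay_pos 0). nra.
Qed.

Lemma ex_RInt_dominated a b : ex_RInt f a b.
Proof. apply (ex_RInt_continuous (V:=R_CompleteNormedModule)). intros; apply Hf. Qed.

Lemma RInt_dominated a b : 0 <= a <= b -> Rabs (RInt f a b) <= C * decay_tail a.
Proof.
  intros Hab. destruct Hf as [Hc Hb].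
  assert (Ht : 0 <= decay_tail b).
  { apply Rdiv_le_0_compat; [left; apply Rpower_pos|lra]. }
  apply Rle_trans with (RInt (fun r => C * decay r) a b).
  - apply Rle_trans with (RInt (fun r => Rabs (f r)) a b).
    + apply abs_RInt_le; [lra|apply ex_RInt_dominated].
    + apply RInt_le; [lra| | |intros x Hx; apply Hb; lra].
      * apply (ex_RInt_continuous (V:=R_CompleteNormedModule)).
        intros x _. apply continuous_Rabs_comp, Hc.
      * apply (ex_RInt_continuous (V:=R_CompleteNormedModule)).
        intros x _. apply continuous_Rmult; [apply continuous_const|apply continuous_decay].
  - rewrite (RInt_scal (V:=R_CompleteNormedModule)).
    + change (scal C (RInt decay a b)) with (C * RInt decay a b).
      rewrite RInt_decay by exact Hab.
      generalize dominated_const_nonneg. nra.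
    + apply (ex_RInt_continuous (V:=R_CompleteNormedModule)). intros; apply continuous_decay.
Qed.

Lemma RInt_0_infty_dominated :
  is_lim_seq (fun n => RInt f 0 (INR n)) (RInt_0_infty f) /\
  forall x, 0 <= x -> Rabs (RInt f 0 x - RInt_0_infty f) <= C * decay_tail x.
Proof.
  apply RInt_0_infty_tail.
  - intros; apply ex_RInt_dominated.
  - apply RInt_dominated.
  - intros eps He. apply decay_tail_small; [apply dominated_const_nonneg|exact He].
Qed.

Lemma is_lim_RInt_0_infty : is_lim (fun x => RInt f 0 x) p_infty (RInt_0_infty f).
Proof.
  apply is_lim_spec. intros eps.
  destruct (decay_tail_small C eps dominated_const_nonneg (cond_pos eps)) as [A HA].
  exists (Rmax A 0). intros x Hx.
  eapply Rle_lt_trans; [apply RInt_0_infty_dominated|apply HA];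
    generalize (Rmax_l A 0) (Rmax_r A 0); lra.
Qed.

Lemma RInt_0_1_le_RInt_0_infty : (forall r, 0 <= r -> 0 <= f r) -> RInt f 0 1 <= RInt_0_infty f.
Proof.
  intros Hp.
  apply (is_lim_seq_le_loc (fun _ => RInt f 0 1) (fun n => RInt f 0 (INR n))
           (RInt f 0 1) (RInt_0_infty f)).
  - exists 1%nat. intros n Hn.
    assert (H1 : 1 <= INR n) by (apply (le_INR 1); exact Hn).
    enough (0 <= RInt f 1 (INR n)) by
      (rewrite <- (RInt_0_minus f 1 (INR n)) in * by (try apply ex_RInt_dominated; lra); lra).
    apply RInt_ge_0; [lra|apply ex_RInt_dominated|intros x Hx; apply Hp; lra].
  - apply is_lim_seq_const.
  - apply RInt_0_infty_dominated.
Qed.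

End Dominated.

Lemma dominated_opp C f : dominated C f -> dominated C (fun r => - f r).
Proof.
  intros [Hc Hb]. split.
  - intros x. apply (continuous_opp (V:=R_NormedModule)), Hc.
  - intros r Hr. rewrite Rabs_Ropp. apply Hb, Hr.
Qed.

Lemma RInt_0_infty_opp C f : dominated C f -> RInt_0_infty (fun r => - f r) = - RInt_0_infty f.
Proof.
  intros Hf.
  assert (H := proj1 (is_lim_seq_opp _ _) (proj1 (RInt_0_infty_dominated C f Hf))).
  apply (is_lim_seq_ext _ (fun n => RInt (fun r => - f r) 0 (INR n))) in H.
  - apply is_lim_seq_unique in H. unfold RInt_0_infty at 1. rewrite H. reflexivity.
  - intros n. rewrite (RInt_opp (V:=R_CompleteNormedModule)); [reflexivity|].
    apply (ex_RInt_dominated C f Hf).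
Qed.

Lemma RInt_0_infty_close Cf Cg K f g : dominated Cf f -> dominated Cg g ->
  (forall r, 0 <= r -> Rabs (f r - g r) <= K * decay r) ->
  Rabs (RInt_0_infty f - RInt_0_infty g) <= K / (m - 1).
Proof.
  intros Hf Hg Hfg.
  assert (Hd : dominated K (fun r => f r - g r)).
  { split; [|exact Hfg]. intros x. apply continuous_Rplus; [apply Hf|].
    apply (continuous_opp (V:=R_NormedModule)), Hg. }
  apply (is_lim_seq_le (fun n => Rabs (RInt f 0 (INR n) - RInt g 0 (INR n))) (fun _ => K / (m - 1))
           (Rabs (RInt_0_infty f - RInt_0_infty g)) (K / (m - 1))).
  - intros n. rewrite <- (RInt_minus (V:=R_CompleteNormedModule)) by
      (first [apply (ex_RInt_dominated Cf f Hf) | apply (ex_RInt_dominated Cg g Hg)]).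
    replace (K / (m - 1)) with (K * decay_tail 0).
    + apply (RInt_dominated K _ Hd). split; [lra|apply pos_INR].
    + unfold decay_tail. rewrite Rplus_0_r. unfold Rpower.
      rewrite ln_1, Rmult_0_r, exp_0. field. lra.
  - apply (is_lim_seq_abs _ (RInt_0_infty f - RInt_0_infty g)).
    apply is_lim_seq_minus'; [apply (RInt_0_infty_dominated Cf f Hf)|apply (RInt_0_infty_dominated Cg g Hg)].
  - apply is_lim_seq_const.
Qed.

End Decay.

(** * The integral kernel *)

Definition bracket_pow (a z : R) := Rpower (1 + z * z) (- a).

Lemma one_plus_sqr_pos z : 0 < 1 + z * z.
Proof. nra. Qed.

Lemma bracket_pow_pos a z : 0 < bracket_pow a z.
Proof. apply Rpower_pos. Qed.

Lemma bracket_pow_succ a z : bracket_pow (a + 1) z = bracket_pow a z / (1 + z * z).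
Proof.
  unfold bracket_pow. replace (- (a + 1)) with (- a + - 1) by ring.
  rewrite Rpower_plus, (Rpower_Ropp _ 1), Rpower_1 by apply one_plus_sqr_pos.
  reflexivity.
Qed.

Lemma is_derive_bracket_pow a z : is_derive (bracket_pow a) z (-2 * a * z * bracket_pow (a + 1) z).
Proof.
  unfold bracket_pow. eapply is_derive_eq.
  - apply (is_derive_Rcomp (fun u => Rpower u (- a)) (fun y => 1 + y * y) z
             (- a * Rpower (1 + z * z) (- a - 1)) (2 * z));
      [apply is_derive_Rpower, one_plus_sqr_pos | auto_derive; trivial; ring].
  - replace (- a - 1) with (- (a + 1)) by ring. ring.
Qed.

Lemma continuous_bracket_pow a z : continuous (bracket_pow a) z.
Proof. eapply is_derive_continuous, is_derive_bracket_pow. Qed.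

Section Kernel.
Variable m : R.
Hypothesis Hm : 1 < m.

Definition Q z := bracket_pow m z.
Definition dQ z := -2 * m * z * bracket_pow (m + 1) z.
Definition d2Q z := -2 * m * bracket_pow (m + 1) z + 4 * m * (m + 1) * (z * z) * bracket_pow (m + 2) z.
Definition d3Q z := 12 * m * (m + 1) * z * bracket_pow (m + 2) z
  - 8 * m * (m + 1) * (m + 2) * (z * z * z) * bracket_pow (m + 3) z.

Lemma is_derive_Q z : is_derive Q z (dQ z).
Proof. apply is_derive_bracket_pow. Qed.

Lemma is_derive_dQ z : is_derive dQ z (d2Q z).
Proof.
  unfold dQ, d2Q. eapply is_derive_eq.
  - apply is_derive_Rmult; [|apply is_derive_bracket_pow].
    apply is_derive_scal, is_derive_Rid.
  - replace (m + 1 + 1) with (m + 2) by ring. simpl. ring.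
Qed.

Lemma is_derive_d2Q z : is_derive d2Q z (d3Q z).
Proof.
  unfold d2Q, d3Q. eapply is_derive_eq.
  - apply is_derive_Rplus; [apply is_derive_scal, is_derive_bracket_pow|].
    apply is_derive_Rmult; [|apply is_derive_bracket_pow].
    apply is_derive_scal. apply is_derive_Rmult; apply is_derive_Rid.
  - replace (m + 1 + 1) with (m + 2) by ring. replace (m + 2 + 1) with (m + 3) by ring.
    simpl. ring.
Qed.

Lemma continuous_Q z : continuous Q z.
Proof. eapply is_derive_continuous, is_derive_Q. Qed.

Lemma continuous_dQ z : continuous dQ z.
Proof. eapply is_derive_continuous, is_derive_dQ. Qed.

Lemma continuous_d2Q z : continuous d2Q z.
Proof. eapply is_derive_continuous, is_derive_d2Q. Qed.

Lemma continuous_d3Q z : continuous d3Q z.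
Proof.
  unfold d3Q. apply continuous_Rplus.
  - apply continuous_Rmult; [|apply continuous_bracket_pow].
    apply continuous_Rmult; [apply continuous_const|apply continuous_id].
  - apply (continuous_opp (V:=R_NormedModule)).
    apply continuous_Rmult; [|apply continuous_bracket_pow].
    apply continuous_Rmult; [apply continuous_const|].
    apply continuous_Rmult; [|apply continuous_id].
    apply continuous_Rmult; apply continuous_id.
Qed.

Lemma d2Q_eq z : (1 + z * z) * d2Q z = -2 * m * Q z - 2 * (m + 1) * z * dQ z.
Proof.
  unfold d2Q, dQ, Q. replace (m + 2) with (m + 1 + 1) by ring. rewrite !bracket_pow_succ.
  field. apply Rgt_not_eq, one_plus_sqr_pos.
Qed.

Definition KQ := 2 * m + 4 * m * (m + 1).

(** Each of [Q, dQ, d2Q] is [O(Q)]: a factor [z^k] is absorbed by [(1 + z^2)^(-k/2)]. *)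
Lemma Q_le z : Rabs (Q z) <= KQ * Q z.
Proof.
  unfold KQ. rewrite Rabs_pos_eq by (left; apply bracket_pow_pos).
  generalize (bracket_pow_pos m z). unfold Q. nra.
Qed.

Lemma dQ_le z : Rabs (dQ z) <= KQ * Q z.
Proof.
  unfold dQ, KQ, Q. rewrite bracket_pow_succ.
  assert (H0 := bracket_pow_pos m z). assert (H1 := one_plus_sqr_pos z).
  set (q := bracket_pow m z) in *.
  assert (Hz : Rabs z <= 1 + z * z) by (apply Rabs_le; split; nra).
  replace (-2 * m * z * (q / (1 + z * z))) with (- (2 * m * q / (1 + z * z)) * z) by (field; lra).
  rewrite Rabs_mult, Rabs_Ropp, Rabs_pos_eq by (apply Rdiv_le_0_compat; nra).
  apply Rle_trans with (2 * m * q / (1 + z * z) * (1 + z * z)).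
  - apply Rmult_le_compat_l; [apply Rdiv_le_0_compat; nra|exact Hz].
  - replace (2 * m * q / (1 + z * z) * (1 + z * z)) with (2 * m * q) by (field; lra). nra.
Qed.

Lemma d2Q_le z : Rabs (d2Q z) <= KQ * Q z.
Proof.
  unfold d2Q, KQ, Q. replace (m + 2) with (m + 1 + 1) by ring. rewrite !bracket_pow_succ.
  assert (H0 := bracket_pow_pos m z). assert (H1 := one_plus_sqr_pos z).
  set (q := bracket_pow m z) in *.
  assert (B1 : 0 <= q / (1 + z * z) <= q).
  { split; [apply Rdiv_le_0_compat; lra|].
    apply Rmult_le_reg_r with (1 + z * z); [lra|].
    replace (q / (1 + z * z) * (1 + z * z)) with q by (field; lra). nra. }
  assert (B2 : 0 <= z * z * (q / (1 + z * z) / (1 + z * z)) <= q).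
  { split.
    { apply Rmult_le_pos; [nra|]. apply Rdiv_le_0_compat; [|lra]. apply Rdiv_le_0_compat; lra. }
    apply Rmult_le_reg_r with ((1 + z * z) * (1 + z * z)); [nra|].
    replace (z * z * (q / (1 + z * z) / (1 + z * z)) * ((1 + z * z) * (1 + z * z)))
      with (q * (z * z)) by (field; lra).
    apply Rmult_le_compat_l; nra. }
  replace (-2 * m * (q / (1 + z * z)) + 4 * m * (m + 1) * (z * z) * (q / (1 + z * z) / (1 + z * z)))
    with (- (2 * m * (q / (1 + z * z))) + 4 * m * (m + 1) * (z * z * (q / (1 + z * z) / (1 + z * z))))
    by ring.
  eapply Rle_trans; [apply Rabs_triang|]. rewrite Rabs_Ropp, !Rabs_pos_eq by nra. nra.
Qed.

(** Peetre's inequality [1 + r^2 <= 2 (1 + v^2) (1 + (v + r)^2)]. *)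
Lemma Q_shift_le v r : Q (v + r) <= Rpower (2 * (1 + v * v)) m * Q r.
Proof.
  unfold Q, bracket_pow. rewrite !Rpower_Ropp.
  assert (Ha := one_plus_sqr_pos (v + r)). assert (Hb := one_plus_sqr_pos r).
  assert (Hc := one_plus_sqr_pos v).
  assert (P1 := Rpower_pos (1 + (v + r) * (v + r)) m). assert (P2 := Rpower_pos (1 + r * r) m).
  assert (Hle : Rpower (1 + r * r) m <= Rpower (2 * (1 + v * v)) m * Rpower (1 + (v + r) * (v + r)) m).
  { rewrite Rpower_mult_distr by nra. apply Rle_Rpower_l; [lra|split; [lra|]].
    assert (0 <= (v + r + v) * (v + r + v)) by apply Rle_0_sqr.
    assert (0 <= (v * (v + r)) * (v * (v + r))) by apply Rle_0_sqr. nra. }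
  apply Rmult_le_reg_r with (Rpower (1 + (v + r) * (v + r)) m * Rpower (1 + r * r) m); [nra|].
  field_simplify; lra.
Qed.

Lemma pospow_Q_le r : 0 <= r -> pospow m r * Q r <= Rpower 2 m * decay m r.
Proof.
  intros Hr. unfold decay. rewrite Rabs_pos_eq by exact Hr.
  destruct (Rlt_le_dec 0 r) as [Hp|Hn].
  - rewrite pospow_pos by exact Hp. unfold Q, bracket_pow. rewrite !Rpower_Ropp.
    assert (P1 := Rpower_pos r m). assert (P2 := Rpower_pos (1 + r * r) m).
    assert (P3 := Rpower_pos 2 m). assert (P4 := Rpower_pos (1 + r) m).
    assert (Hle : Rpower r m * Rpower (1 + r) m <= Rpower 2 m * Rpower (1 + r * r) m).
    { rewrite !Rpower_mult_distr by nra. apply Rle_Rpower_l; [lra|split; nra]. }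
    apply Rmult_le_reg_r with (Rpower (1 + r * r) m * Rpower (1 + r) m); [nra|].
    field_simplify; lra.
  - rewrite pospow_nonpos, Rmult_0_l by lra.
    apply Rmult_le_pos; left; apply Rpower_pos.
Qed.

Definition kernel (q : R -> R) (v r : R) := pospow m r * q (v + r).

Definition shift_const (v : R) := Rpower (4 * (1 + v * v)) m.

Lemma shift_const_le v w : Rabs v <= Rabs w -> shift_const v <= shift_const w.
Proof.
  intros H. unfold shift_const. apply Rle_Rpower_l; [lra|split; [nra|]].
  assert (E : forall x, x * x = Rabs x * Rabs x).
  { intros x. rewrite <- Rabs_mult. symmetry. apply Rabs_pos_eq, Rle_0_sqr. }
  rewrite (E v), (E w). generalize (Rabs_pos v). nra.
Qed.

Lemma kernel_dominated q K v : (forall z, continuous q z) ->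
  (forall z, Rabs (q z) <= K * Q z) -> dominated m (K * shift_const v) (kernel q v).
Proof.
  intros Hc Hq. split.
  - intros r. apply continuous_Rmult; [apply continuous_pospow; lra|].
    apply (continuous_comp (fun r => v + r) q); [|apply Hc].
    apply continuous_Rplus; [apply continuous_const|apply continuous_id].
  - intros r Hr. unfold kernel. rewrite Rabs_mult, (Rabs_pos_eq (pospow m r)) by apply pospow_ge0.
    assert (HK : 0 <= K) by (generalize (Hq 0) (Rabs_pos (q 0)) (bracket_pow_pos m 0); unfold Q; nra).
    assert (H1 := pospow_ge0 m r). assert (H3 := pospow_Q_le r Hr).
    assert (H2 : Rabs (q (v + r)) <= K * (Rpower (2 * (1 + v * v)) m * Q r)).
    { eapply Rle_trans; [apply Hq|]. apply Rmult_le_compat_l; [exact HK|apply Q_shift_le]. }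
    assert (E : shift_const v = Rpower (2 * (1 + v * v)) m * Rpower 2 m).
    { unfold shift_const. rewrite Rpower_mult_distr by nra. f_equal; ring. }
    assert (P := Rpower_pos (2 * (1 + v * v)) m).
    apply Rle_trans with (pospow m r * (K * (Rpower (2 * (1 + v * v)) m * Q r))).
    + apply Rmult_le_compat_l; assumption.
    + rewrite E. replace (pospow m r * (K * (Rpower (2 * (1 + v * v)) m * Q r)))
        with (K * Rpower (2 * (1 + v * v)) m * (pospow m r * Q r)) by ring.
      replace (K * (Rpower (2 * (1 + v * v)) m * Rpower 2 m) * decay m r)
        with (K * Rpower (2 * (1 + v * v)) m * (Rpower 2 m * decay m r)) by ring.
      apply Rmult_le_compat_l; [nra|exact H3].
Qed.

End Kernel.

Section KernelIntegral.
Variable m : R.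
Hypothesis Hm : 1 < m.

Lemma is_derive_kernel_param q dq x t : (forall z, is_derive q z (dq z)) ->
  is_derive (fun u => kernel m q u t) x (kernel m dq x t).
Proof.
  intros Hq. unfold kernel. apply is_derive_scal.
  eapply is_derive_eq; [apply (is_derive_Rcomp q (fun u => u + t) x (dq (x + t)) 1)|].
  - apply Hq.
  - auto_derive; trivial; ring.
  - ring.
Qed.

Lemma is_derive_RInt_kernel q dq b v :
  (forall z, is_derive q z (dq z)) -> (forall z, continuous dq z) ->
  is_derive (fun v => RInt (kernel m q v) 0 b) v (RInt (kernel m dq v) 0 b).
Proof.
  intros Hd Hc.
  rewrite (RInt_ext (kernel m dq v) (fun t => Derive (fun u => kernel m q u t) v)).
  2:{ intros t _. symmetry. apply is_derive_unique, is_derive_kernel_param, Hd. }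
  apply (is_derive_RInt_param (fun u t => kernel m q u t) 0 b v).
  - apply filter_forall. intros y t _. eexists. apply is_derive_kernel_param, Hd.
  - intros t _. apply continuity_2d_pt_ext with (fun u w => pospow m w * dq (u + w)).
    { intros u w. symmetry. apply is_derive_unique, is_derive_kernel_param, Hd. }
    apply continuity_2d_pt_mult.
    + apply (continuity_1d_2d_pt_comp (pospow m) (fun _ w => w)); [|apply continuity_2d_pt_id2].
      apply continuity_pt_filterlim, continuous_pospow. lra.
    + apply (continuity_1d_2d_pt_comp dq (fun u w => u + w)).
      * apply continuity_pt_filterlim, Hc.
      * apply continuity_2d_pt_plus; [apply continuity_2d_pt_id1|apply continuity_2d_pt_id2].
  - apply filter_forall. intros y. apply (ex_RInt_continuous (V:=R_CompleteNormedModule)).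
    intros r _. apply continuous_Rmult; [apply continuous_pospow; lra|].
    apply (continuous_comp (fun r => y + r) q).
    + apply continuous_Rplus; [apply continuous_const|apply continuous_id].
    + eapply is_derive_continuous, Hd.
Qed.

(** The tail bound of [RInt_0_infty_dominated] is uniform for [v] in a bounded set. *)
Lemma RInt_kernel_CVU q K x : (forall z, continuous q z) ->
  (forall z, Rabs (q z) <= K * Q m z) ->
  CVU_dom (fun n y => RInt (kernel m q y) 0 (INR n)) (fun y => x - 1 < y < x + 1).
Proof.
  intros Hc Hq eps.
  set (M := Rabs x + 1).
  assert (HK : 0 <= K) by (generalize (Hq 0) (Rabs_pos (q 0)) (bracket_pow_pos m 0); unfold Q; nra).
  assert (HC : 0 <= K * shift_const m M) by (apply Rmult_le_pos; [exact HK|left; apply Rpower_pos]).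
  destruct (decay_tail_small m Hm (K * shift_const m M) eps HC (cond_pos eps)) as [A HA].
  destruct (eventually_INR_ge (Rmax A 0)) as [N HN]. exists N. intros n Hn y Hy.
  assert (Hd := kernel_dominated m Hm q K y Hc Hq).
  rewrite (is_lim_seq_unique _ _ (proj1 (RInt_0_infty_dominated m Hm _ _ Hd))). simpl.
  specialize (HN n Hn). generalize (Rmax_l A 0) (Rmax_r A 0). intros.
  eapply Rle_lt_trans; [apply (proj2 (RInt_0_infty_dominated m Hm _ _ Hd)); lra|].
  eapply Rle_lt_trans; [|apply (HA (INR n)); lra].
  apply Rmult_le_compat_r; [apply Rdiv_le_0_compat; [left; apply Rpower_pos|lra]|].
  apply Rmult_le_compat_l; [exact HK|]. apply shift_const_le; [exact Hm|].
  unfold M. rewrite (Rabs_pos_eq (Rabs x + 1)) by (generalize (Rabs_pos x); lra).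
  apply Rabs_le. generalize (Rle_abs x) (Rle_abs (- x)). rewrite Rabs_Ropp. intros. split; lra.
Qed.

Lemma is_derive_RInt_0_infty_kernel q dq d2q K :
  (forall z, is_derive q z (dq z)) -> (forall z, is_derive dq z (d2q z)) ->
  (forall z, continuous d2q z) ->
  (forall z, Rabs (q z) <= K * Q m z) -> (forall z, Rabs (dq z) <= K * Q m z) ->
  forall x, is_derive (fun v => RInt_0_infty (kernel m q v)) x (RInt_0_infty (kernel m dq x)).
Proof.
  intros D1 D2 C2 B1 B2 x.
  assert (C1 : forall z, continuous dq z) by (intros z; eapply is_derive_continuous, D2).
  assert (C0 : forall z, continuous q z) by (intros z; eapply is_derive_continuous, D1).
  set (fn := fun (n : nat) (v : R) => RInt (kernel m q v) 0 (INR n)).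
  set (D := fun y => x - 1 < y < x + 1).
  assert (Hder : forall n y, Derive (fn n) y = RInt (kernel m dq y) 0 (INR n)).
  { intros n y. apply is_derive_unique, is_derive_RInt_kernel; assumption. }
  assert (HL' : Lim_seq (fun n => Derive (fn n) x) = RInt_0_infty (kernel m dq x)).
  { apply is_lim_seq_unique. apply (is_lim_seq_ext (fun n => RInt (kernel m dq x) 0 (INR n))).
    - intros n. symmetry. apply Hder.
    - apply (RInt_0_infty_dominated m Hm _ _ (kernel_dominated m Hm dq K x C1 B2)). }
  eapply is_derive_eq.
  - apply (is_derive_ext (fun y => real (Lim_seq (fun n => fn n y)))); [reflexivity|].
    apply (CVU_Derive fn D).
    + apply open_and; [apply open_gt|apply open_lt].
    + intros a b y Ha Hb Hy. unfold D in *. lra.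
    + apply (RInt_kernel_CVU q K x C0 B1).
    + intros n y _. eexists. apply (is_derive_RInt_kernel q dq); assumption.
    + intros n y _. apply continuity_pt_ext with (fun y => RInt (kernel m dq y) 0 (INR n)).
      { intros; symmetry; apply Hder. }
      apply continuity_pt_filterlim.
      apply (is_derive_continuous (fun v => RInt (kernel m dq v) 0 (INR n)) y
               (RInt (kernel m d2q y) 0 (INR n))).
      apply is_derive_RInt_kernel; assumption.
    + intros eps. destruct (RInt_kernel_CVU dq K x C1 B2 eps) as [N HN].
      exists N. intros n Hn y Hy.
      rewrite (Lim_seq_ext _ (fun n => RInt (kernel m dq y) 0 (INR n))), Hder by (intros; apply Hder).
      apply HN; assumption.
    + unfold D. lra.
  - rewrite HL'. reflexivity.
Qed.

End KernelIntegral.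

(** * The solution [phi] *)

Lemma Rabs_boundary_factor_le v z : Rabs ((z * z + 2 * v * z - 1) / (1 + z * z)) <= 1 + Rabs v.
Proof.
  assert (Hz := one_plus_sqr_pos z).
  assert (Ez : z * z = Rabs z * Rabs z).
  { rewrite <- Rabs_mult. symmetry. apply Rabs_pos_eq, Rle_0_sqr. }
  assert (H1 : Rabs (z * z - 1) <= 1 + z * z) by (apply Rabs_le; split; nra).
  assert (H2 : 2 * Rabs z <= 1 + z * z) by (generalize (Rle_0_sqr (Rabs z - 1)); unfold Rsqr; nra).
  unfold Rdiv. rewrite Rabs_mult, Rabs_inv, (Rabs_pos_eq (1 + z * z)) by lra.
  apply Rmult_le_reg_r with (1 + z * z); [lra|].
  rewrite Rmult_assoc, Rinv_l, Rmult_1_r by lra.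
  replace (z * z + 2 * v * z - 1) with ((z * z - 1) + v * (2 * z)) by ring.
  eapply Rle_trans; [apply Rabs_triang|]. rewrite Rabs_mult, Rabs_mult, (Rabs_pos_eq 2) by lra.
  generalize (Rabs_pos v). nra.
Qed.

Section Phi.
Variable m : R.
Hypothesis Hm : 1 < m.

Definition phi v := RInt_0_infty (kernel m (Q m) v).
Definition dphi v := RInt_0_infty (kernel m (dQ m) v).
Definition d2phi v := RInt_0_infty (kernel m (d2Q m) v).

Lemma kernel_Q_dominated v : dominated m (KQ m * shift_const m v) (kernel m (Q m) v).
Proof. apply kernel_dominated; [exact Hm|apply continuous_Q|apply Q_le, Hm]. Qed.

Lemma kernel_dQ_dominated v : dominated m (KQ m * shift_const m v) (kernel m (dQ m) v).
Proof. apply kernel_dominated; [exact Hm|apply continuous_dQ|apply dQ_le; exact Hm]. Qed.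

Lemma kernel_d2Q_dominated v : dominated m (KQ m * shift_const m v) (kernel m (d2Q m) v).
Proof. apply kernel_dominated; [exact Hm|apply continuous_d2Q|apply d2Q_le; exact Hm]. Qed.

Lemma is_derive_phi v : is_derive phi v (dphi v).
Proof.
  apply (is_derive_RInt_0_infty_kernel m Hm _ _ (d2Q m) (KQ m)).
  - apply is_derive_Q.
  - apply is_derive_dQ.
  - apply continuous_d2Q.
  - apply Q_le, Hm.
  - apply dQ_le, Hm.
Qed.

Lemma is_derive_dphi v : is_derive dphi v (d2phi v).
Proof.
  apply (is_derive_RInt_0_infty_kernel m Hm _ _ (d3Q m) (KQ m)).
  - apply is_derive_dQ.
  - apply is_derive_d2Q.
  - apply continuous_d3Q.
  - apply dQ_le, Hm.
  - apply d2Q_le, Hm.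
Qed.

(** A primitive in [r] of [(1 + v^2) kernel d2Q - m (m - 1) kernel Q]. *)
Definition boundary v r := pospow (m + 2) r * dQ m (v + r)
  - 2 * (v + r) * pospow (m + 1) r * dQ m (v + r) - m * pospow (m + 1) r * Q m (v + r).

Lemma is_derive_boundary v r : is_derive (boundary v) r
  ((1 + v * v) * kernel m (d2Q m) v r - m * (m - 1) * kernel m (Q m) v r).
Proof.
  unfold boundary, Rminus. eapply is_derive_eq.
  - apply is_derive_Rplus; [apply is_derive_Rplus|].
    + apply is_derive_Rmult; [apply is_derive_pospow; lra|apply is_derive_shift, is_derive_dQ].
    + apply (is_derive_ext (fun r => -2 * ((v + r) * pospow (m + 1) r * dQ m (v + r))));
        [intros t; simpl; ring|].
      apply is_derive_scal. apply is_derive_Rmult; [apply is_derive_Rmult|].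
      * apply (is_derive_Rplus (fun _ => v) (fun r => r)); [auto_derive; reflexivity|apply is_derive_Rid].
      * apply is_derive_pospow; lra.
      * apply is_derive_shift, is_derive_dQ.
    + apply (is_derive_ext (fun r => - m * (pospow (m + 1) r * Q m (v + r))));
        [intros t; simpl; ring|].
      apply is_derive_scal, is_derive_Rmult; [apply is_derive_pospow; lra|].
      apply is_derive_shift, is_derive_Q.
  - unfold kernel. replace (m + 2 - 1) with (m + 1) by ring. replace (m + 1 - 1) with m by ring.
    replace (m + 2) with (m + 1 + 1) by ring. rewrite !pospow_succ.
    assert (E := d2Q_eq m (v + r)). assert (Hz := one_plus_sqr_pos (v + r)).
    replace (d2Q m (v + r)) with
      ((-2 * m * Q m (v + r) - 2 * (m + 1) * (v + r) * dQ m (v + r)) / (1 + (v + r) * (v + r)))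
      by (rewrite <- E; field; lra).
    unfold dQ, Q. rewrite bracket_pow_succ. field. lra.
Qed.

Lemma boundary_eq v r : boundary v r = m * r * kernel m (Q m) v r *
  (((v + r) * (v + r) + 2 * v * (v + r) - 1) / (1 + (v + r) * (v + r))).
Proof.
  unfold boundary, kernel, dQ, Q. rewrite bracket_pow_succ.
  replace (m + 2) with (m + 1 + 1) by ring. rewrite !pospow_succ.
  field. apply Rgt_not_eq, one_plus_sqr_pos.
Qed.

Lemma boundary_le v r : 0 <= r ->
  Rabs (boundary v r) <= m * (1 + Rabs v) * (KQ m * shift_const m v) * (m - 1) * decay_tail m r.
Proof.
  intros Hr. rewrite boundary_eq.
  assert (Hk := proj2 (kernel_Q_dominated v) r Hr).
  assert (Hf := Rabs_boundary_factor_le v (v + r)).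
  assert (Hdec : r * decay m r <= (m - 1) * decay_tail m r).
  { unfold decay, decay_tail. rewrite Rabs_pos_eq by exact Hr.
    replace ((m - 1) * (Rpower (1 + r) (1 - m) / (m - 1))) with ((1 + r) * Rpower (1 + r) (- m)).
    - apply Rmult_le_compat_r; [left; apply Rpower_pos|lra].
    - replace (1 - m) with (1 + - m) by ring. rewrite Rpower_plus, Rpower_1 by lra. field. lra. }
  assert (HC : 0 <= KQ m * shift_const m v) by (apply (dominated_const_nonneg m _ _ (kernel_Q_dominated v))).
  rewrite !Rabs_mult, (Rabs_pos_eq m), (Rabs_pos_eq r) by lra.
  apply Rle_trans with (m * r * (KQ m * shift_const m v * decay m r) * (1 + Rabs v)).
  - apply Rmult_le_compat.
    + apply Rmult_le_pos; [nra|apply Rabs_pos].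
    + apply Rabs_pos.
    + apply Rmult_le_compat_l; [nra|exact Hk].
    + exact Hf.
  - replace (m * r * (KQ m * shift_const m v * decay m r) * (1 + Rabs v))
      with (m * (1 + Rabs v) * (KQ m * shift_const m v) * (r * decay m r)) by ring.
    replace (m * (1 + Rabs v) * (KQ m * shift_const m v) * (m - 1) * decay_tail m r)
      with (m * (1 + Rabs v) * (KQ m * shift_const m v) * ((m - 1) * decay_tail m r)) by ring.
    apply Rmult_le_compat_l; [|exact Hdec].
    generalize (Rabs_pos v). intros. apply Rmult_le_pos; [nra|exact HC].
Qed.

Lemma is_lim_seq_boundary v : is_lim_seq (fun n => boundary v (INR n)) 0.
Proof.
  apply is_lim_seq_spec. intros eps.
  set (C := m * (1 + Rabs v) * (KQ m * shift_const m v) * (m - 1)).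
  assert (HC : 0 <= C).
  { unfold C. generalize (Rabs_pos v) (dominated_const_nonneg m _ _ (kernel_Q_dominated v)).
    intros. apply Rmult_le_pos; [|lra]. apply Rmult_le_pos; nra. }
  destruct (decay_tail_small m Hm C eps HC (cond_pos eps)) as [A HA].
  destruct (eventually_INR_ge A) as [N HN]. exists N. intros n Hn.
  rewrite Rminus_0_r. eapply Rle_lt_trans; [apply boundary_le, pos_INR|].
  apply HA, HN, Hn.
Qed.

Lemma phi_ode v : (1 + v * v) * d2phi v = m * (m - 1) * phi v.
Proof.
  assert (L0 := proj1 (RInt_0_infty_dominated m Hm _ _ (kernel_Q_dominated v))).
  assert (L2 := proj1 (RInt_0_infty_dominated m Hm _ _ (kernel_d2Q_dominated v))).
  assert (L := is_lim_seq_minus' _ _ _ _ (is_lim_seq_scal_l _ (1 + v * v) _ L2)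
                 (is_lim_seq_scal_l _ (m * (m - 1)) _ L0)).
  assert (E : forall n : nat, (1 + v * v) * RInt (kernel m (d2Q m) v) 0 (INR n)
            - m * (m - 1) * RInt (kernel m (Q m) v) 0 (INR n) = boundary v (INR n)).
  { intros n.
    assert (Hb0 : boundary v 0 = 0) by (unfold boundary; rewrite !pospow_nonpos by lra; ring).
    rewrite <- RInt_lincomb by
      (first [apply (ex_RInt_dominated m _ _ (kernel_Q_dominated v))
             |apply (ex_RInt_dominated m _ _ (kernel_d2Q_dominated v))]).
    replace (boundary v (INR n)) with (boundary v (INR n) - boundary v 0) by (rewrite Hb0; ring).
    apply is_RInt_unique, (is_RInt_derive (V:=R_CompleteNormedModule) (boundary v)).
    - intros r _. apply is_derive_boundary.
    - intros r _. apply continuous_Rplus.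
      + apply continuous_Rmult; [apply continuous_const|apply (kernel_d2Q_dominated v)].
      + apply (continuous_opp (V:=R_NormedModule)).
        apply continuous_Rmult; [apply continuous_const|apply (kernel_Q_dominated v)]. }
  apply (is_lim_seq_ext _ _ _ E) in L.
  assert (U := is_lim_seq_unique _ _ L).
  rewrite (is_lim_seq_unique _ _ (is_lim_seq_boundary v)) in U.
  injection U. unfold phi, d2phi. lra.
Qed.

Lemma phi_pos v : 0 < phi v.
Proof.
  apply Rlt_le_trans with (RInt (kernel m (Q m) v) 0 1).
  - apply RInt_gt_0; [lra| |].
    + intros x Hx. apply Rmult_lt_0_compat; [apply pospow_gt0; lra|apply bracket_pow_pos].
    + intros x _. apply (kernel_Q_dominated v).
  - apply (RInt_0_1_le_RInt_0_infty m Hm _ _ (kernel_Q_dominated v)).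
    intros r Hr. apply Rmult_le_pos; [apply pospow_ge0|left; apply bracket_pow_pos].
Qed.

Lemma dphi_0_neg : dphi 0 < 0.
Proof.
  assert (Hd := dominated_opp m _ _ (kernel_dQ_dominated 0)).
  assert (Hsign : forall r, 0 < r -> 0 < - kernel m (dQ m) 0 r).
  { intros r Hr. unfold kernel, dQ. rewrite Rplus_0_l.
    assert (0 < pospow m r) by (apply pospow_gt0, Hr). assert (0 < bracket_pow (m + 1) r) by apply bracket_pow_pos.
    assert (0 < pospow m r * bracket_pow (m + 1) r) by (apply Rmult_lt_0_compat; assumption).
    replace (- (pospow m r * (-2 * m * r * bracket_pow (m + 1) r)))
      with (2 * m * r * (pospow m r * bracket_pow (m + 1) r)) by ring.
    apply Rmult_lt_0_compat; [nra|assumption]. }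
  enough (0 < RInt_0_infty (fun r => - kernel m (dQ m) 0 r)) by
    (rewrite (RInt_0_infty_opp m Hm _ _ (kernel_dQ_dominated 0)) in H; unfold dphi; lra).
  apply Rlt_le_trans with (RInt (fun r => - kernel m (dQ m) 0 r) 0 1).
  - apply RInt_gt_0; [lra|intros x Hx; apply Hsign; lra|intros x _; apply Hd].
  - apply (RInt_0_1_le_RInt_0_infty m Hm _ _ Hd).
    intros r Hr. destruct (Req_dec r 0) as [->|Hne].
    + unfold kernel. rewrite pospow_nonpos by lra. lra.
    + left. apply Hsign. lra.
Qed.

End Phi.

(** * Asymptotics of [phi] *)

Section Scaling.
Variable m : R.
Hypothesis Hm : 1 < m.

(** After [r = v y], [phi v = v^(1-m) RInt_0_infty (scaled_kernel (1/v^2))]. *)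
Definition scaled_kernel (e y : R) := pospow m y * Rpower (e + (1 + Rabs y) * (1 + Rabs y)) (- m).

Lemma scaled_kernel_nonneg e y : 0 <= scaled_kernel e y.
Proof. apply Rmult_le_pos; [apply pospow_ge0|left; apply Rpower_pos]. Qed.

Lemma continuous_scaled_kernel e y : 0 <= e -> continuous (scaled_kernel e) y.
Proof.
  intros He. apply continuous_Rmult; [apply continuous_pospow; lra|].
  apply (continuous_comp (fun y => e + (1 + Rabs y) * (1 + Rabs y)) (fun u => Rpower u (- m))).
  - apply continuous_Rplus; [apply continuous_const|].
    apply continuous_Rmult;
      (apply continuous_Rplus; [apply continuous_const|apply continuous_Rabs]).
  - eapply is_derive_continuous, is_derive_Rpower. generalize (Rabs_pos y). nra.
Qed.

Lemma scaled_kernel_dominated e : 0 <= e -> dominated m 1 (scaled_kernel e).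
Proof.
  intros He. split; [intros y; apply continuous_scaled_kernel, He|].
  intros y Hy. rewrite Rabs_pos_eq, Rmult_1_l by apply scaled_kernel_nonneg.
  unfold scaled_kernel, decay. rewrite !Rabs_pos_eq by lra.
  assert (H1 := pospow_le_Rpower m y ltac:(lra) Hy).
  assert (H2 : Rpower (e + (1 + y) * (1 + y)) (- m) <= Rpower (1 + y) (2 * - m)).
  { rewrite <- Rpower_sqr by lra. apply Rpower_Ropp_le_contravar; nra. }
  apply Rle_trans with (Rpower (1 + y) m * Rpower (1 + y) (2 * - m)).
  - apply Rmult_le_compat; [apply pospow_ge0|left; apply Rpower_pos|exact H1|exact H2].
  - rewrite <- Rpower_plus. right. f_equal. ring.
Qed.

Lemma scaled_kernel_close e : 0 <= e ->
  forall y, 0 <= y -> Rabs (scaled_kernel e y - scaled_kernel 0 y) <= (m * e) * decay m y.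
Proof.
  intros He y Hy. unfold scaled_kernel, decay. rewrite !Rabs_pos_eq with (x := y) by lra.
  rewrite Rplus_0_l.
  set (a := (1 + y) * (1 + y)). assert (Ha : 1 <= a) by (unfold a; nra).
  assert (HMVT : exists c, a <= c <= a + e /\
    Rpower (a + e) (- m) - Rpower a (- m) = - m * Rpower c (- m - 1) * e).
  { destruct (Req_dec e 0) as [E|E].
    - exists a. split; [lra|]. rewrite E, Rplus_0_r. ring.
    - destruct (MVT_gen (fun t => Rpower t (- m)) a (a + e) (fun t => - m * Rpower t (- m - 1)))
        as [c [Hc1 Hc2]].
      + intros t Ht. rewrite Rmin_left, Rmax_right in Ht by lra. apply (is_derive_Rpower t (- m)). lra.
      + intros t Ht. rewrite Rmin_left, Rmax_right in Ht by lra.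
        apply continuity_pt_filterlim.
        apply (is_derive_continuous (fun u => Rpower u (- m)) t (- m * Rpower t (- m - 1))).
        apply is_derive_Rpower. lra.
      + rewrite Rmin_left, Rmax_right in Hc1 by lra. exists c. split; [exact Hc1|].
        rewrite Hc2. ring. }
  destruct HMVT as [c [Hc HF]].
  assert (Hp := pospow_ge0 m y).
  assert (B1 : Rpower c (- m - 1) <= Rpower a (- m)).
  { apply Rle_trans with (Rpower a (- m - 1)).
    - replace (- m - 1) with (- (m + 1)) by ring. apply Rpower_Ropp_le_contravar; lra.
    - apply Rle_Rpower; lra. }
  assert (Hpos := Rpower_pos c (- m - 1)).
  replace (pospow m y * Rpower (e + a) (- m) - pospow m y * Rpower a (- m))
    with (- (m * e * (pospow m y * Rpower c (- m - 1))))
    by (rewrite Rplus_comm; rewrite <- Rmult_minus_distr_l, HF; ring).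
  rewrite Rabs_Ropp, Rabs_pos_eq by (apply Rmult_le_pos; nra).
  apply Rmult_le_compat_l; [nra|].
  apply Rle_trans with (Rpower (1 + y) m * Rpower a (- m)).
  - apply Rmult_le_compat; [exact Hp|lra|apply pospow_le_Rpower; lra|exact B1].
  - unfold a. rewrite Rpower_sqr, <- Rpower_plus by lra. right. f_equal. ring.
Qed.

Lemma RInt_scaled_kernel v x : 0 < v ->
  RInt (scaled_kernel (1 / (v * v))) 0 x = Rpower v (m - 1) * RInt (kernel m (Q m) v) 0 (v * x).
Proof.
  intros Hv.
  assert (Hpt : forall y, v * kernel m (Q m) v (v * y + 0)
                  = Rpower v (1 - m) * scaled_kernel (1 / (v * v)) y).
  { intros y. unfold kernel, scaled_kernel, Q, bracket_pow. rewrite Rplus_0_r.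
    destruct (Rlt_le_dec 0 y) as [Hy|Hy].
    - rewrite !pospow_pos by nra. rewrite Rabs_pos_eq by lra.
      rewrite <- Rpower_mult_distr by lra.
      replace (1 + (v + v * y) * (v + v * y)) with ((v * v) * (1 / (v * v) + (1 + y) * (1 + y)))
        by (field; lra).
      rewrite <- Rpower_mult_distr by (try apply Rplus_lt_le_0_compat; try apply Rdiv_lt_0_compat; nra).
      rewrite Rpower_sqr by lra.
      replace (1 - m) with (1 + m + 2 * - m) by ring. rewrite !Rpower_plus, Rpower_1 by lra. ring.
    - rewrite !pospow_nonpos by nra. ring. }
  assert (Hc : dominated m (KQ m * shift_const m v) (kernel m (Q m) v)) by apply kernel_Q_dominated, Hm.
  assert (E := RInt_comp_lin (V:=R_CompleteNormedModule) (kernel m (Q m) v) v 0 0 x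
                 (ex_RInt_dominated m _ _ Hc _ _)).
  rewrite Rmult_0_r, !Rplus_0_r in E. rewrite <- E.
  rewrite (RInt_ext (fun y => scal v (kernel m (Q m) v (v * y + 0)))
             (fun y => Rpower v (1 - m) * scaled_kernel (1 / (v * v)) y))
    by (intros y _; apply Hpt).
  rewrite (RInt_scal (V:=R_CompleteNormedModule)).
  - change (scal (Rpower v (1 - m)) (RInt (scaled_kernel (1 / (v * v))) 0 x))
      with (Rpower v (1 - m) * RInt (scaled_kernel (1 / (v * v))) 0 x).
    rewrite <- Rmult_assoc, <- Rpower_plus. replace (m - 1 + (1 - m)) with 0 by ring.
    rewrite Rpower_O, Rmult_1_l by lra. reflexivity.
  - apply (ex_RInt_dominated m 1). apply scaled_kernel_dominated.
    apply Rdiv_le_0_compat; nra.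
Qed.

Lemma phi_scaled v : 0 < v ->
  Rpower v (m - 1) * phi m v = RInt_0_infty (scaled_kernel (1 / (v * v))).
Proof.
  intros Hv.
  assert (He : 0 <= 1 / (v * v)) by (apply Rdiv_le_0_compat; nra).
  assert (H1 := is_lim_RInt_0_infty m Hm _ _ (scaled_kernel_dominated _ He)).
  assert (H2 : is_lim (fun x => Rpower v (m - 1) * RInt (kernel m (Q m) v) 0 (v * x)) p_infty
                 (Rpower v (m - 1) * phi m v)).
  { apply (is_lim_scal_l _ _ _ (phi m v)).
    apply (is_lim_comp (fun x => RInt (kernel m (Q m) v) 0 x) (fun x => v * x) p_infty (phi m v) p_infty).
    - apply (is_lim_RInt_0_infty m Hm _ _ (kernel_Q_dominated m Hm v)).
    - apply is_lim_spec. intros M. exists (M / v). intros x Hx.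
      apply Rmult_lt_compat_l with (r := v) in Hx; [|exact Hv].
      replace (v * (M / v)) with M in Hx by (field; lra). exact Hx.
    - exists 0. intros x _. discriminate. }
  apply (is_lim_ext _ (fun x => RInt (scaled_kernel (1 / (v * v))) 0 x)) in H2;
    [|intros x; symmetry; apply RInt_scaled_kernel, Hv].
  apply is_lim_unique in H1. apply is_lim_unique in H2. rewrite H1 in H2.
  injection H2. intros E. symmetry. exact E.
Qed.

Definition c1 := RInt_0_infty (scaled_kernel 0).

Lemma c1_pos : 0 < c1.
Proof.
  assert (Hd := scaled_kernel_dominated 0 (Rle_refl 0)).
  apply Rlt_le_trans with (RInt (scaled_kernel 0) 0 1).
  - apply RInt_gt_0; [lra| |intros y _; apply Hd].
    intros y Hy. apply Rmult_lt_0_compat; [apply pospow_gt0; lra|apply Rpower_pos].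
  - apply (RInt_0_1_le_RInt_0_infty m Hm _ _ Hd). intros; apply scaled_kernel_nonneg.
Qed.

Lemma phi_scaled_close v : 0 < v ->
  Rabs (Rpower v (m - 1) * phi m v - c1) <= m / (m - 1) * (1 / (v * v)).
Proof.
  intros Hv. assert (He : 0 <= 1 / (v * v)) by (apply Rdiv_le_0_compat; nra).
  rewrite phi_scaled by exact Hv.
  eapply Rle_trans.
  - apply (RInt_0_infty_close m Hm 1 1 (m * (1 / (v * v)))).
    + apply scaled_kernel_dominated, He.
    + apply scaled_kernel_dominated; lra.
    + apply scaled_kernel_close, He.
  - right. field. lra.
Qed.

Lemma is_lim_phi_p_infty : is_lim (fun v => Rpower v (m - 1) * phi m v) p_infty c1.
Proof.
  apply is_lim_spec. intros eps.
  set (K := m / (m - 1)). assert (HK : 0 < K) by (apply Rdiv_lt_0_compat; lra).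
  assert (He := cond_pos eps).
  exists (Rmax 1 (K / eps)). intros v Hv.
  assert (Hv1 : 1 < v) by (eapply Rle_lt_trans; [apply Rmax_l|exact Hv]).
  assert (Hv2 : K / eps < v) by (eapply Rle_lt_trans; [apply Rmax_r|exact Hv]).
  eapply Rle_lt_trans; [apply phi_scaled_close; lra|]. fold K.
  apply Rle_lt_trans with (K / v).
  - unfold Rdiv. rewrite Rmult_1_l. apply Rmult_le_compat_l; [lra|].
    apply Rinv_le_contravar; nra.
  - apply Rmult_lt_compat_r with (r := eps) in Hv2; [|exact He].
    replace (K / eps * eps) with K in Hv2 by (field; lra).
    apply Rmult_lt_reg_r with v; [lra|]. unfold Rdiv. rewrite Rmult_assoc, Rinv_l by lra. lra.
Qed.

End Scaling.

Definition potential (m v : R) := m * (m - 1) / (1 + v * v).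

Section Reflection.
Variable m : R.
Hypothesis Hm : 1 < m.

Lemma phi_ode_solution : ode_solution (potential m) (phi m) (dphi m).
Proof.
  split; intros v; [apply is_derive_phi, Hm|].
  eapply is_derive_eq; [apply is_derive_dphi, Hm|].
  assert (E := phi_ode m Hm v). assert (Hv := one_plus_sqr_pos v).
  unfold potential. apply Rmult_eq_reg_l with (1 + v * v); [|lra].
  rewrite E. field. lra.
Qed.

Lemma psi_ode_solution : ode_solution (potential m) (fun v => phi m (- v)) (fun v => - dphi m (- v)).
Proof.
  apply ode_solution_reflect; [|apply phi_ode_solution].
  intros v. unfold potential. f_equal. ring.
Qed.

Definition phi_wronskian := -2 * phi m 0 * dphi m 0.

Lemma phi_wronskian_pos : 0 < phi_wronskian.
Proof. unfold phi_wronskian. generalize (phi_pos m Hm 0) (dphi_0_neg m Hm). nra. Qed.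

Lemma wronskian_phi_psi v : phi m v * - dphi m (- v) - dphi m v * phi m (- v) = phi_wronskian.
Proof.
  rewrite (wronskian_const _ _ _ _ _ phi_ode_solution psi_ode_solution v).
  unfold phi_wronskian. rewrite Ropp_0. ring.
Qed.

Definition c2 := phi_wronskian / ((2 * m - 1) * c1 m).

Lemma c2_pos : 0 < c2.
Proof.
  apply Rdiv_lt_0_compat; [apply phi_wronskian_pos|].
  apply Rmult_lt_0_compat; [lra|apply c1_pos, Hm].
Qed.

(** L'Hopital, using [(psi/phi)' = phi_wronskian / phi^2] and [v^(m-1) phi v -> c1]. *)
Lemma is_lim_psi_phi_ratio : is_lim (fun v => phi m (- v) / phi m v / Rpower v (2 * m - 1)) p_infty
  (phi_wronskian / ((2 * m - 1) * (c1 m * c1 m))).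
Proof.
  assert (Hc1 := c1_pos m Hm).
  apply (lhopital_p_infty (fun v => phi m (- v) / phi m v) (fun v => Rpower v (2 * m - 1))
           (fun v => phi_wronskian / (phi m v * phi m v)) (fun v => (2 * m - 1) * Rpower v (2 * m - 1 - 1)) 0).
  - intros v _. assert (Hp := phi_pos m Hm v).
    apply (is_derive_ext (fun v => phi m (- v) * / phi m v)); [intros; reflexivity|].
    eapply is_derive_eq.
    + apply is_derive_Rmult; [apply (proj1 psi_ode_solution)|].
      apply (is_derive_inv (phi m)); [apply (proj1 phi_ode_solution)|lra].
    + rewrite <- (wronskian_phi_psi v). simpl. field. lra.
  - intros v Hv. apply is_derive_Rpower, Hv.
  - intros v Hv. apply Rmult_lt_0_compat; [lra|apply Rpower_pos].
  - apply (is_lim_le_p_loc (fun v => v)); [|apply is_lim_id].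
    exists 1. intros v Hv. rewrite <- (Rpower_1 v) at 1 by lra. apply Rle_Rpower; lra.
  - apply (is_lim_ext_loc (fun v => (fun x => phi_wronskian / ((2 * m - 1) * (x * x))) (Rpower v (m - 1) * phi m v))).
    + exists 0. intros v Hv. replace (2 * m - 1 - 1) with ((m - 1) + (m - 1)) by ring.
      rewrite Rpower_plus. assert (Hp := phi_pos m Hm v). assert (Hr := Rpower_pos v (m - 1)).
      field. split; lra.
    + apply (is_lim_comp_continuous (fun v => Rpower v (m - 1) * phi m v)
               (fun x => phi_wronskian / ((2 * m - 1) * (x * x))) p_infty (c1 m));
        [apply is_lim_phi_p_infty, Hm|].
      apply continuity_pt_filterlim, continuity_pt_div;
        [apply continuity_pt_const; intros ? ?; reflexivity| |].
      * apply continuity_pt_mult; [apply continuity_pt_const; intros ? ?; reflexivity|].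
        apply continuity_pt_mult; apply continuity_pt_id.
      * apply Rmult_integral_contrapositive. split; nra.
Qed.

Lemma is_lim_psi_p_infty : is_lim (fun v => phi m (- v) / Rpower v m) p_infty c2.
Proof.
  assert (Hc1 := c1_pos m Hm).
  assert (H := is_lim_mult _ _ _ _ _ is_lim_psi_phi_ratio (is_lim_phi_p_infty m Hm) I).
  replace c2 with (phi_wronskian / ((2 * m - 1) * (c1 m * c1 m)) * c1 m) by (unfold c2; field; lra).
  apply (is_lim_ext_loc (fun v => phi m (- v) / phi m v / Rpower v (2 * m - 1) * (Rpower v (m - 1) * phi m v))
           (fun v => phi m (- v) / Rpower v m) p_infty); [|exact H].
  exists 0. intros v Hv. assert (Hp := phi_pos m Hm v).
  replace (2 * m - 1) with (m + (m - 1)) by ring. rewrite Rpower_plus.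
  assert (Hr := Rpower_pos v (m - 1)). assert (Hr2 := Rpower_pos v m). field. lra.
Qed.

End Reflection.

(** * The normalized basis *)

Definition Ck (n : nat) (f : R -> R) := forall k, (k <= n)%nat -> forall x, ex_derive_n f k x.

Lemma Ck_0 f : Ck 0 f.
Proof. intros k Hk x. replace k with 0%nat by lia. exact I. Qed.

Lemma Ck_S n (f df : R -> R) : (forall x, is_derive f x (df x)) -> Ck n df -> Ck (S n) f.
Proof.
  intros Hd H [|[|k]] Hk x; [exact I|exists (df x); apply Hd|].
  apply (ex_derive_ext (Derive_n df k)); [|apply (H (S k)); lia].
  intros t. replace (S k) with (k + 1)%nat by lia. rewrite <- Derive_n_comp.
  apply Derive_n_ext. intros u. symmetry. apply is_derive_unique, Hd.
Qed.

Lemma Ck_Derive n f : Ck (S n) f -> Ck n (Derive f).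
Proof.
  intros H [|k] Hk x; [exact I|].
  apply (ex_derive_ext (Derive_n f (S k))); [|apply (H (S (S k))); lia].
  intros t. replace (S k) with (k + 1)%nat by lia. rewrite <- Derive_n_comp. reflexivity.
Qed.

Lemma Ck_le n f : Ck (S n) f -> Ck n f.
Proof. intros H k Hk. apply H. lia. Qed.

Lemma Ck_plus n : forall f g, Ck n f -> Ck n g -> Ck n (fun x => f x + g x).
Proof.
  induction n as [|n IH]; intros f g Hf Hg; [apply Ck_0|].
  apply (Ck_S n _ (fun x => Derive f x + Derive g x)).
  - intros x. apply is_derive_Rplus; apply Derive_correct; [apply (Hf 1%nat)|apply (Hg 1%nat)]; lia.
  - apply IH; apply Ck_Derive; assumption.
Qed.

Lemma Ck_mult n : forall f g, Ck n f -> Ck n g -> Ck n (fun x => f x * g x).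
Proof.
  induction n as [|n IH]; intros f g Hf Hg; [apply Ck_0|].
  apply (Ck_S n _ (fun x => Derive f x * g x + f x * Derive g x)).
  - intros x. apply is_derive_Rmult; apply Derive_correct; [apply (Hf 1%nat)|apply (Hg 1%nat)]; lia.
  - apply Ck_plus; apply IH; auto using Ck_Derive, Ck_le.
Qed.

Lemma Ck_const n c : Ck n (fun _ => c).
Proof. intros k _ x. apply ex_derive_n_const. Qed.

Lemma Ck_id n : Ck n (fun x => x).
Proof. intros k _ x. apply (ex_derive_n_ext (fun x => x ^ 1)); [intros; ring|apply ex_derive_n_pow]. Qed.

(** Since [(1 + x^2)^(-1)' = -2 x (1 + x^2)^(-2)], the derivatives are polynomials in [x] and [(1 + x^2)^(-1)]. *)
Lemma Ck_inv_one_plus_sqr n : Ck n (fun x => / (1 + x * x)).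
Proof.
  induction n as [|n IH]; [apply Ck_0|].
  apply (Ck_S n _ (fun x => -2 * x * (/ (1 + x * x) * / (1 + x * x)))).
  - intros x. assert (Hz : 0 < 1 + x * x) by nra.
    eapply is_derive_eq; [apply (is_derive_inv (fun x => 1 + x * x)); [|lra]|].
    + auto_derive; trivial.
    + simpl. field. lra.
  - apply Ck_mult; [apply Ck_mult; [apply Ck_const|apply Ck_id]|apply Ck_mult; exact IH].
Qed.

Lemma ode_solution_smooth p f df : (forall n, Ck n p) -> ode_solution p f df -> smooth f.
Proof.
  intros Hp [Hf Hdf].
  assert (H : forall n, Ck n f /\ Ck n df).
  { induction n as [|n [IHf IHdf]]; [split; apply Ck_0|].
    split; [apply (Ck_S n f df Hf IHdf)|].
    apply (Ck_S n df _ Hdf), Ck_mult; [apply Hp|exact IHf]. }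
  intros n x. apply (proj1 (H n) n (le_n n)).
Qed.

Lemma Ck_potential m n : Ck n (potential m).
Proof.
  apply (Ck_mult n (fun _ => m * (m - 1))); [apply Ck_const|apply Ck_inv_one_plus_sqr].
Qed.

Lemma Wt_potential gamma v : Wt gamma v = potential (gamma + 1) v.
Proof. unfold Wt, potential. replace (v ^ 2) with (v * v) by ring. f_equal. ring. Qed.

Lemma is_solution_iff gamma f : is_solution gamma f <-> ode_solution (potential (gamma + 1)) f (Derive f).
Proof.
  split.
  - intros [H1 [H2 H3]]. split; intros x; [apply Derive_correct, H1|].
    specialize (H3 x). unfold L0 in H3. rewrite Wt_potential in H3.
    replace (potential (gamma + 1) x * f x) with (Derive_n f 2 x) by lra.
    apply Derive_correct, H2.
  - intros [H1 H2]. split; [intros x; eexists; apply H1|split].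
    + intros x. eexists. apply H2.
    + intros x. unfold L0. rewrite Wt_potential.
      change (Derive_n f 2 x) with (Derive (Derive f) x).
      rewrite (is_derive_unique _ _ _ (H2 x)). ring.
Qed.

Lemma is_solution_of_ode_solution gamma f df :
  ode_solution (potential (gamma + 1)) f df -> is_solution gamma f.
Proof.
  intros [H1 H2]. apply is_solution_iff. split; intros x; [apply Derive_correct; eexists; apply H1|].
  apply (is_derive_ext df); [intros t; symmetry; apply is_derive_unique, H1|].
  apply H2.
Qed.

Lemma is_lim_comp_opp (F : R -> R) x l : is_lim F (Rbar_opp x) l -> is_lim (fun v => F (- v)) x l.
Proof.
  intros H. apply (is_lim_comp F Ropp x l (Rbar_opp x) H).
  - apply is_lim_opp, is_lim_id.
  - destruct x as [r| |]; simpl; [|exists 0; intros; discriminate|exists 0; intros; discriminate].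
    exists (mkposreal 1 Rlt_0_1). intros y _ Hy E. apply Hy. injection E. lra.
Qed.

Lemma asymp_equiv_reflect f g x : (forall v, g (- v) = g v) ->
  asymp_equiv f g (Rbar_opp x) -> asymp_equiv (fun v => f (- v)) g x.
Proof.
  intros Hg H. unfold asymp_equiv.
  apply (is_lim_ext (fun v => f (- v) / g (- v))); [intros v; rewrite Hg; reflexivity|].
  apply (is_lim_comp_opp (fun u => f u / g u)), H.
Qed.

Lemma asymp_equiv_of_is_lim f g c x : c <> 0 -> is_lim (fun v => f v / g v) x c ->
  asymp_equiv f (fun v => c * g v) x.
Proof.
  intros Hc H. unfold asymp_equiv.
  apply (is_lim_ext (fun v => f v / g v * / c)).
  - intros v. unfold Rdiv. rewrite Rinv_mult. ring.
  - replace (Finite 1) with (Rbar_mult c (/ c)) by (simpl; f_equal; field; exact Hc).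
    apply is_lim_scal_r, H.
Qed.

Lemma asymp_equiv_eventually_le f g x : asymp_equiv f g x ->
  Rbar_locally' x (fun v => 0 < g v) -> Rbar_locally' x (fun v => f v <= 2 * g v).
Proof.
  intros H Hpos. apply is_lim_spec in H.
  assert (Hlt : Rbar_locally' x (fun v => Rabs (f v / g v - 1) < 1)) by apply (H (mkposreal 1 Rlt_0_1)).
  apply (filter_imp (fun v => 0 < g v /\ Rabs (f v / g v - 1) < 1)); [|apply filter_and; assumption].
  intros v [Hg Hr]. apply Rabs_lt_between in Hr.
  assert (Hr2 : f v / g v * g v < 2 * g v) by (apply Rmult_lt_compat_r; lra).
  unfold Rdiv in Hr2. rewrite Rmult_assoc, Rinv_l in Hr2 by lra. lra.
Qed.

Section Construction.
Variable gamma : R.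
Hypothesis Hgamma : 0 < gamma.

Lemma one_lt_gamma_succ : 1 < gamma + 1.
Proof. lra. Qed.

Definition normalization := / sqrt (phi_wronskian (gamma + 1)).
Definition psi1 v := normalization * phi (gamma + 1) v.
Definition dpsi1 v := normalization * dphi (gamma + 1) v.
Definition psi2 v := psi1 (- v).
Definition dpsi2 v := - dpsi1 (- v).

Lemma normalization_pos : 0 < normalization.
Proof. apply Rinv_0_lt_compat, sqrt_lt_R0, phi_wronskian_pos, one_lt_gamma_succ. Qed.

Lemma psi1_ode : ode_solution (potential (gamma + 1)) psi1 dpsi1.
Proof. apply ode_solution_scal, phi_ode_solution, one_lt_gamma_succ. Qed.

Lemma psi2_ode : ode_solution (potential (gamma + 1)) psi2 dpsi2.
Proof.
  apply ode_solution_reflect; [|exact psi1_ode].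
  intros v. unfold potential. f_equal. ring.
Qed.

Lemma psi1_pos v : 0 < psi1 v.
Proof. apply Rmult_lt_0_compat; [apply normalization_pos|apply phi_pos, one_lt_gamma_succ]. Qed.

Lemma psi2_pos v : 0 < psi2 v.
Proof. apply psi1_pos. Qed.

Lemma psi_wronskian v : psi1 v * dpsi2 v - dpsi1 v * psi2 v = 1.
Proof.
  assert (HW := phi_wronskian_pos _ one_lt_gamma_succ).
  unfold psi2, dpsi2, psi1, dpsi1, normalization.
  transitivity (/ sqrt (phi_wronskian (gamma + 1)) * / sqrt (phi_wronskian (gamma + 1)) *
    (phi (gamma + 1) v * - dphi (gamma + 1) (- v) - dphi (gamma + 1) v * phi (gamma + 1) (- v)));
    [ring|].
  rewrite wronskian_phi_psi, <- Rinv_mult, sqrt_sqrt by lra. field. lra.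
Qed.

Lemma wronskian_psi v : wronskian psi1 psi2 v = 1.
Proof.
  unfold wronskian.
  rewrite (is_derive_unique _ _ _ (proj1 psi1_ode v)), (is_derive_unique _ _ _ (proj1 psi2_ode v)).
  apply psi_wronskian.
Qed.

Lemma psi1_asymp_p_infty :
  asymp_equiv psi1 (fun v => normalization * c1 (gamma + 1) * Rpower (Rabs v) (- gamma)) p_infty.
Proof.
  apply asymp_equiv_of_is_lim.
  - generalize normalization_pos (c1_pos _ one_lt_gamma_succ). nra.
  - apply (is_lim_ext_loc (fun v => normalization * (Rpower v (gamma + 1 - 1) * phi (gamma + 1) v))).
    + exists 0. intros v Hv. unfold psi1. rewrite Rabs_pos_eq, Rpower_Ropp by lra.
      replace (gamma + 1 - 1) with gamma by ring. field. apply Rgt_not_eq, Rpower_pos.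
    + apply (is_lim_scal_l _ _ _ (c1 (gamma + 1))), is_lim_phi_p_infty, one_lt_gamma_succ.
Qed.

Lemma psi1_asymp_m_infty :
  asymp_equiv psi1 (fun v => normalization * c2 (gamma + 1) * Rpower (Rabs v) (1 + gamma)) m_infty.
Proof.
  apply asymp_equiv_of_is_lim.
  - generalize normalization_pos (c2_pos _ one_lt_gamma_succ). nra.
  - apply (is_lim_ext (fun v => (fun u => psi1 (- u) / Rpower (Rabs (- u)) (1 + gamma)) (- v)));
      [intros v; rewrite Ropp_involutive; reflexivity|].
    apply (is_lim_comp_opp (fun u => psi1 (- u) / Rpower (Rabs (- u)) (1 + gamma)) m_infty). simpl.
    apply (is_lim_ext_loc (fun u => normalization * (phi (gamma + 1) (- u) / Rpower u (gamma + 1)))).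
    + exists 0. intros u Hu. unfold psi1. rewrite Rabs_Ropp, Rabs_pos_eq by lra.
      replace (1 + gamma) with (gamma + 1) by ring. unfold Rdiv. ring.
    + apply (is_lim_scal_l _ _ _ (c2 (gamma + 1))), is_lim_psi_p_infty, one_lt_gamma_succ.
Qed.

Lemma psi2_asymp_p_infty :
  asymp_equiv psi2 (fun v => normalization * c2 (gamma + 1) * Rpower (Rabs v) (1 + gamma)) p_infty.
Proof. apply asymp_equiv_reflect; [intros v; rewrite Rabs_Ropp; reflexivity|apply psi1_asymp_m_infty]. Qed.

Lemma psi2_asymp_m_infty :
  asymp_equiv psi2 (fun v => normalization * c1 (gamma + 1) * Rpower (Rabs v) (- gamma)) m_infty.
Proof. apply asymp_equiv_reflect; [intros v; rewrite Rabs_Ropp; reflexivity|apply psi1_asymp_p_infty]. Qed.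

Lemma asymp_equiv_power_le f K a x : 0 < K ->
  asymp_equiv f (fun v => K * Rpower (Rabs v) a) x ->
  Rbar_locally' x (fun v => f v <= 2 * K * Rpower (Rabs v) a).
Proof.
  intros HK H. apply (filter_imp (fun v => f v <= 2 * (K * Rpower (Rabs v) a))); [intros v; lra|].
  apply asymp_equiv_eventually_le; [exact H|].
  apply filter_forall. intros v. apply Rmult_lt_0_compat; [exact HK|apply Rpower_pos].
Qed.

Lemma psi_bounds_asymptotics : exists v0 C c1 c2 : R, 0 < v0 /\ 0 < C /\ 0 < c1 /\ 0 < c2 /\
  (forall v, v0 <= v -> psi1 v <= C * Rpower (Rabs v) (- gamma)) /\
  (forall v, v <= - v0 -> psi1 v <= C * Rpower (Rabs v) (1 + gamma)) /\
  asymp_equiv psi1 (fun v => c1 * Rpower (Rabs v) (- gamma)) p_infty /\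
  asymp_equiv psi1 (fun v => c2 * Rpower (Rabs v) (1 + gamma)) m_infty /\
  (forall v, v0 <= v -> psi2 v <= C * Rpower (Rabs v) (gamma + 1)) /\
  (forall v, v <= - v0 -> psi2 v <= C * Rpower (Rabs v) (- gamma)) /\
  asymp_equiv psi2 (fun v => c2 * Rpower (Rabs v) (1 + gamma)) p_infty /\
  asymp_equiv psi2 (fun v => c1 * Rpower (Rabs v) (- gamma)) m_infty.
Proof.
  set (K1 := normalization * c1 (gamma + 1)). set (K2 := normalization * c2 (gamma + 1)).
  assert (HK1 : 0 < K1) by (generalize normalization_pos (c1_pos _ one_lt_gamma_succ); unfold K1; nra).
  assert (HK2 : 0 < K2) by (generalize normalization_pos (c2_pos _ one_lt_gamma_succ); unfold K2; nra).
  destruct (asymp_equiv_power_le _ _ _ _ HK1 psi1_asymp_p_infty) as [M1 H1].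
  destruct (asymp_equiv_power_le _ _ _ _ HK2 psi1_asymp_m_infty) as [M2 H2].
  destruct (asymp_equiv_power_le _ _ _ _ HK2 psi2_asymp_p_infty) as [M3 H3].
  destruct (asymp_equiv_power_le _ _ _ _ HK1 psi2_asymp_m_infty) as [M4 H4].
  set (v0 := Rmax (Rmax (Rabs M1) (Rabs M2)) (Rmax (Rabs M3) (Rabs M4)) + 1).
  assert (Hv0 : Rabs M1 < v0 /\ Rabs M2 < v0 /\ Rabs M3 < v0 /\ Rabs M4 < v0).
  { unfold v0. generalize (Rmax_l (Rmax (Rabs M1) (Rabs M2)) (Rmax (Rabs M3) (Rabs M4)))
      (Rmax_r (Rmax (Rabs M1) (Rabs M2)) (Rmax (Rabs M3) (Rabs M4)))
      (Rmax_l (Rabs M1) (Rabs M2)) (Rmax_r (Rabs M1) (Rabs M2))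
      (Rmax_l (Rabs M3) (Rabs M4)) (Rmax_r (Rabs M3) (Rabs M4)). lra. }
  destruct Hv0 as [HM1 [HM2 [HM3 HM4]]].
  generalize (Rle_abs M1) (Rle_abs (- M2)) (Rle_abs M3) (Rle_abs (- M4)). rewrite !Rabs_Ropp. intros.
  assert (Hle : forall f K K' a v, 0 < K' -> f v <= 2 * K * Rpower (Rabs v) a ->
            f v <= 2 * (K + K') * Rpower (Rabs v) a).
  { intros f K K' a v HK' Hf. generalize (Rpower_pos (Rabs v) a). nra. }
  exists v0, (2 * (K1 + K2)), K1, K2.
  split; [generalize (Rabs_pos M1); lra|]. split; [lra|]. split; [exact HK1|]. split; [exact HK2|].
  split; [intros v Hv; apply Hle; [exact HK2|apply H1; lra]|].
  split; [intros v Hv; rewrite (Rplus_comm K1); apply Hle; [exact HK1|apply H2; lra]|].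
  split; [exact psi1_asymp_p_infty|]. split; [exact psi1_asymp_m_infty|].
  split; [intros v Hv; rewrite (Rplus_comm K1), (Rplus_comm gamma); apply Hle; [exact HK1|apply H3; lra]|].
  split; [intros v Hv; apply Hle; [exact HK2|apply H4; lra]|].
  split; [exact psi2_asymp_p_infty|exact psi2_asymp_m_infty].
Qed.

End Construction.

Theorem proposition2p4 (gamma : R) (hgamma : 1 / 2 < gamma) :
  exists psi1 psi2 : R -> R,
    smooth psi1 /\ smooth psi2 /\
    (forall v, 0 < psi1 v) /\ (forall v, 0 < psi2 v) /\
    is_solution gamma psi1 /\ is_solution gamma psi2 /\
    (* (1) *)
    (forall v, psi1 (- v) = psi2 v) /\
    (* (2) basis of the solution space, Wronskian = 1 *)
    (forall a b : R, (forall v, a * psi1 v + b * psi2 v = 0) -> a = 0 /\ b = 0) /\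
    (forall phi : R -> R, is_solution gamma phi ->
       exists a b : R, forall v, phi v = a * psi1 v + b * psi2 v) /\
    (forall v, wronskian psi1 psi2 v = 1) /\
    (* (3) bounds and asymptotics *)
    (exists v0 C c1 c2 : R, 0 < v0 /\ 0 < C /\ 0 < c1 /\ 0 < c2 /\
      (forall v, v0 <= v -> psi1 v <= C * Rpower (Rabs v) (- gamma)) /\
      (forall v, v <= - v0 -> psi1 v <= C * Rpower (Rabs v) (1 + gamma)) /\
      asymp_equiv psi1 (fun v => c1 * Rpower (Rabs v) (- gamma)) p_infty /\
      asymp_equiv psi1 (fun v => c2 * Rpower (Rabs v) (1 + gamma)) m_infty /\
      (forall v, v0 <= v -> psi2 v <= C * Rpower (Rabs v) (gamma + 1)) /\
      (forall v, v <= - v0 -> psi2 v <= C * Rpower (Rabs v) (- gamma)) /\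
      asymp_equiv psi2 (fun v => c2 * Rpower (Rabs v) (1 + gamma)) p_infty /\
      asymp_equiv psi2 (fun v => c1 * Rpower (Rabs v) (- gamma)) m_infty).
Proof.
  assert (Hg : 0 < gamma) by lra.
  set (p := potential (gamma + 1)).
  exists (psi1 gamma), (psi2 gamma).
  split; [apply (ode_solution_smooth p _ _ (Ck_potential _) (psi1_ode gamma Hg))|].
  split; [apply (ode_solution_smooth p _ _ (Ck_potential _) (psi2_ode gamma Hg))|].
  split; [apply psi1_pos, Hg|]. split; [apply psi2_pos, Hg|].
  split; [apply (is_solution_of_ode_solution _ _ _ (psi1_ode gamma Hg))|].
  split; [apply (is_solution_of_ode_solution _ _ _ (psi2_ode gamma Hg))|].
  split; [reflexivity|].
  split; [apply (ode_solution_independent p _ _ _ _ (psi1_ode gamma Hg) (psi2_ode gamma Hg)), psi_wronskian, Hg|].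
  split.
  { intros h Hh. apply is_solution_iff in Hh.
    apply (ode_solution_basis p _ _ _ _ (psi1_ode gamma Hg) (psi2_ode gamma Hg)
             (psi_wronskian gamma Hg) h (Derive h) (psi1_pos gamma Hg) Hh). }
  split; [apply wronskian_psi, Hg|].
  apply psi_bounds_asymptotics, Hg.
Qed.
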